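(* Let $k\in\{1,2\}$, $\beta\in\mathbb{R}\setminus\{0\}$, and for $h>0$ let $u^h$ be the solution of $$\frac{d}{dt}u^h_j + D_+D_0D_-u^h_j + \beta\frac{k+1}{k+2}\Big[(u^h_j)^k D_0u^h_j + D_0\big((u^h)^{k+1}\big)_j\Big] + h\,(D_+D_-D_+D_-u^h)_j=0,\quad j\in\mathbb{Z},\qquad u^h(0)=\varphi=\varphi^h,$$ with real-valued initial datum $\varphi\in\ell^2_h(\mathbb{Z})$. Then for each $T>0$ and each $R>0$ there exists a constant $C=C(R,T,\|\varphi\|_{2,h})$ such that for all $h>0$ $$\int_0^T\sum_{|jh|\le R}h\,|D_\pm u^h_j(t)|^2\,dt\le C.$$
   Context: $x_j=jh$; $\ell^2_h(\mathbb{Z})$ is the space of sequences with $\|z\|_{2,h}^2=\sum_j h|z_j|^2<\infty$. $D_+u_j=(u_{j+1}-u_j)/h$, $D_-u_j=(u_j-u_{j-1})/h$, $D_0u_j=(u_{j+1}-u_{j-1})/(2h)$; powers of sequences are componentwise. The estimate holds for both choices of sign in $D_\pm$. *)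

From Stdlib Require Import Reals ZArith.
From Coquelicot Require Import Coquelicot.
Open Scope R_scope.

Definition gridfun := Z -> R.

(* Enumerate Z as n |-> n (n >= 0) and n |-> -(n+1): the sum over Z of a
   nonnegative family a is the series of a n + a (-(n+1)). *)
Definition zpos (n : nat) : Z := Z.of_nat n.
Definition zneg (n : nat) : Z := (- (Z.of_nat n) - 1)%Z.

Definition is_l2 (h : R) (z : gridfun) : Prop :=
  ex_series (fun n => h * (z (zpos n))^2 + h * (z (zneg n))^2).

Definition l2norm (h : R) (z : gridfun) : R :=
  sqrt (Series (fun n => h * (z (zpos n))^2 + h * (z (zneg n))^2)).

Definition Dp (h : R) (z : gridfun) : gridfun := fun j => (z (j + 1)%Z - z j) / h.
Definition Dm (h : R) (z : gridfun) : gridfun := fun j => (z j - z (j - 1)%Z) / h.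
Definition D0 (h : R) (z : gridfun) : gridfun :=
  fun j => (z (j + 1)%Z - z (j - 1)%Z) / (2 * h).

Definition gpow (z : gridfun) (m : nat) : gridfun := fun j => (z j) ^ m.

Definition Fop (k : nat) (beta h : R) (z : gridfun) : gridfun :=
  fun j =>
    Dp h (D0 h (Dm h z)) j
    + beta * (INR k + 1) / (INR k + 2) * ((z j)^k * D0 h z j + D0 h (gpow z (k+1)) j)
    + h * Dp h (Dm h (Dp h (Dm h z))) j.

(* u : [0,T] -> l^2_h(Z) is a (classical, C^1 in l^2_h) solution on [0,T] with
   time derivative u' and initial datum phi. *)
Definition is_solution (k : nat) (beta h T : R) (phi : gridfun)
  (u u' : R -> gridfun) : Prop :=
  u 0 = phi /\
  (forall t, 0 <= t <= T -> is_l2 h (u t) /\ is_l2 h (u' t)) /\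
  (forall t, 0 <= t <= T ->
     filterlim (fun s => l2norm h (fun j => (u (t + s) j - u t j) / s - u' t j))
       (within (fun s => s <> 0 /\ 0 <= t + s <= T) (locally 0)) (locally 0)) /\
  (forall t, 0 <= t <= T ->
     filterlim (fun s => l2norm h (fun j => u' (t + s) j - u' t j))
       (within (fun s => 0 <= t + s <= T) (locally 0)) (locally 0)) /\
  (forall t, 0 <= t <= T -> forall j : Z, u' t j + Fop k beta h (u t) j = 0).

(* Local sum  sum_{|jh| <= R} h |w_j|^2  (finitely many j; |j| < up (R/h)) *)
Definition local_sum (h Rr : R) (w : gridfun) : R :=
  sum_f_R0 (fun n =>
     (if Rle_dec (Rabs (IZR (zpos n) * h)) Rr then h * (w (zpos n))^2 else 0)
   + (if Rle_dec (Rabs (IZR (zneg n) * h)) Rr then h * (w (zneg n))^2 else 0))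
   (Z.to_nat (up (Rr / h))).

From Stdlib Require Import Reals ZArith Lra Lia Psatz FunctionalExtensionality.
From Coquelicot Require Import Coquelicot.
Open Scope R_scope.

(* Kato-type local smoothing.  Multiply the equation by [h psi_j u_j], where [psi] is a
   bounded nondecreasing weight with increments [h g_j^2] for a Lipschitz cutoff [g] equal to
   1 on [|x| <= R + 2], and sum by parts over a window.  The dispersive term [D+ D0 D-] then
   yields [(1/2) sum h g_(j+1)^2 |D+ u_j|^2] plus a discrete divergence, the hyperviscous term
   yields a square, and every error term carrying derivatives of [psi] is [O(||u||^2)].  The
   nonlinear term is controlled by the discrete Gagliardo-Nirenberg bound
   [|g_j u_j|^2 <= 2 ||u|| ||D+(g u)||] and Young's inequality.  Integrating in time, the
   weighted mass at times [0] and [T] is at most [(2R + 9) ||phi||^2], because the same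
   computation with [psi = 1] shows that [||u(t)|| <= ||phi||].  Boundary fluxes are
   disposed of by ending the windows at nodes where their time integrals are small; such
   nodes exist since the fluxes are dominated by the uniformly bounded local mass.  For
   [h > 1] the estimate is immediate. *)

(** * Summation by parts for the stencil *)

Definition nl_coef (k : nat) (beta : R) : R := beta * (INR k + 1) / (INR k + 2).

Lemma Rabs_nl_coef_le k beta : Rabs (nl_coef k beta) <= Rabs beta.
Proof.
  unfold nl_coef, Rdiv. pose proof (pos_INR k).
  rewrite Rmult_assoc, Rabs_mult.
  rewrite (Rabs_right ((INR k + 1) * / (INR k + 2)))
    by (apply Rle_ge, Rmult_le_pos; [lra | left; apply Rinv_0_lt_compat; lra]).
  rewrite <- (Rmult_1_r (Rabs beta)) at 2. apply Rmult_le_compat_l; [apply Rabs_pos|].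
  apply Rmult_le_reg_r with (INR k + 2); [lra|]. rewrite Rmult_assoc, Rinv_l; lra.
Qed.

Definition Fop_stencil (k : nat) (beta h um2 um1 u0 u1 u2 : R) : R :=
  (u2 - 2*u1 + 2*um1 - um2)/(2*h^3)
  + nl_coef k beta * (u0^k*(u1-um1)/(2*h) + (u1*u1^k - um1*um1^k)/(2*h))
  + h*((u2 - 4*u1 + 6*u0 - 4*um1 + um2)/h^4).

Lemma Fop_eq_stencil k beta h z j : h <> 0 ->
  Fop k beta h z j =
  Fop_stencil k beta h (z (j + -2)%Z) (z (j + -1)%Z) (z j) (z (j+1)%Z) (z (j+2)%Z).
Proof.
  intro Hh. unfold Fop, Fop_stencil, nl_coef, Dp, Dm, D0, gpow, Z.sub.
  repeat rewrite <- Z.add_assoc; simpl Z.add. rewrite !Z.add_0_r, Nat.add_1_r.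
  simpl pow. assert (INR k + 2 <> 0) by (pose proof (pos_INR k); lra).
  field. auto.
Qed.

(* Multiplying the stencil by [h c0 u0] splits it into a bulk term and a discrete divergence
   (the differences of the fluxes [flux_lin], [flux_nl] between neighbouring nodes).  The
   weight [c] enters only through its increments [a_j = c_(j+1) - c_j]. *)
Definition bulk_lin (h cm2 cm1 c0 c1 c2 um1 u0 u1 : R) : R :=
  let am2 := cm1 - cm2 in let am1 := c0 - cm1 in let a0 := c1 - c0 in let a1 := c2 - c1 in
  let e0 := u1 - u0 in let em1 := u0 - um1 in let f := u1 - 2*u0 + um1 in
  /2*(am1+a0+a1)*e0^2 - /4*(am1+a0)*f^2 + c0*f^2 + (a0*(e0+em1) + (a0-am1)*um1)*f
  + /4*u0^2*(a0+am1-am2-a1) + 4*h^2*(e0^2+em1^2) + 8*h^2*u0*f.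

Definition bulk_nl (k : nat) (c0 c1 u0 u1 : R) : R := - /2*(c1-c0)*u0*u1*(u0^k+u1^k).

Definition flux_lin (h cm2 cm1 c0 c1 um2 um1 u0 u1 : R) : R :=
  /4*cm2*u0^2 - 3*cm1*um1*u0 + 3/2*cm1*um1*u1 + 5/4*cm1*um1^2 - /2*c0*um2*u0
  + c0*um1*u0 - 3/4*c0*u0^2 + c1*um1*u0 - /4*c1*um1^2 - /2*c1*u0^2
  + 4*h^2*um1^2 - 4*h^2*u0^2.

Definition flux_nl (k : nat) (c0 um1 u0 : R) : R := /2*c0*um1*u0*(u0^k + um1^k).

Lemma multiplier_identity k beta h cm2 cm1 c0 c1 c2 um2 um1 u0 u1 u2 : h <> 0 ->
  h*c0*u0*Fop_stencil k beta h um2 um1 u0 u1 u2 =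
  bulk_lin h cm2 cm1 c0 c1 c2 um1 u0 u1 / h^2 + nl_coef k beta * bulk_nl k c0 c1 u0 u1
  + (flux_lin h cm1 c0 c1 c2 um1 u0 u1 u2 - flux_lin h cm2 cm1 c0 c1 um2 um1 u0 u1)/h^2
  + nl_coef k beta * (flux_nl k c1 u0 u1 - flux_nl k c0 um1 u0).
Proof.
  intro Hh. unfold Fop_stencil, bulk_lin, flux_lin, flux_nl, bulk_nl, nl_coef.
  assert (INR k + 2 <> 0) by (pose proof (pos_INR k); lra).
  field. auto.
Qed.

(* For the unweighted multiplier ([c = 1]) the bulk term is the full square [f^2]. *)
Definition flux_lin1 (um2 um1 u0 u1 : R) : R :=
  - u0^2 - um1*u0 + 3/2*um1*u1 + um1^2 - /2*um2*u0.

Lemma multiplier_identity1 k beta h um2 um1 u0 u1 u2 : h <> 0 ->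
  h*u0*Fop_stencil k beta h um2 um1 u0 u1 u2 =
  (u1 - 2*u0 + um1)^2 / h^2
  + (flux_lin1 um1 u0 u1 u2 - flux_lin1 um2 um1 u0 u1)/h^2
  + nl_coef k beta * (flux_nl k 1 u0 u1 - flux_nl k 1 um1 u0).
Proof.
  intro Hh. unfold Fop_stencil, flux_lin1, flux_nl, nl_coef.
  assert (INR k + 2 <> 0) by (pose proof (pos_INR k); lra).
  field. auto.
Qed.

Lemma bulk_lin_lower h cm2 cm1 c0 c1 c2 um1 u0 u1 :
  0 < h -> h <= 1 -> 1 <= c0 ->
  0 <= cm1 - cm2 <= h -> 0 <= c0 - cm1 <= h -> 0 <= c1 - c0 <= h -> 0 <= c2 - c1 <= h ->
  Rabs ((c1 - c0) - (c0 - cm1)) <= 2*h^2 ->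
  (c1-c0) + (c0-cm1) - (cm1-cm2) - (c2-c1) >= - 6*h^3 ->
  bulk_lin h cm2 cm1 c0 c1 c2 um1 u0 u1 >=
  /2*((c0-cm1)+(c1-c0)+(c2-c1))*(u1-u0)^2 - 8*h^3*um1^2 - 130*h^3*u0^2.
Proof.
  intros h0 h1 Hc Ham2 Ham1 Ha0 Ha1 Hd Ht. unfold bulk_lin. cbv zeta.
  set (am1 := c0 - cm1) in *. set (a0 := c1 - c0) in *.
  set (e0 := u1 - u0). set (em1 := u0 - um1). set (f := u1 - 2*u0 + um1).
  assert (Hd2 : (a0 - am1)^2 <= 4*h^4).
  { replace (4*h^4) with ((2*h^2)^2) by ring. apply pow_maj_Rabs. auto. }
  (* each cross term against [f] is absorbed by [f^2/8] via [2xy <= x^2 + y^2] *)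
  assert (H1 : (a0*(e0+em1))*f >= -(f^2/8 + 4*h^2*(e0^2+em1^2))).
  { assert (0 <= (f/2 + 2*(a0*(e0+em1)))^2) by apply pow2_ge_0.
    assert (0 <= (e0-em1)^2) by apply pow2_ge_0.
    assert ((a0*(e0+em1))^2 <= 2*h^2*(e0^2+em1^2)).
    { replace ((a0*(e0+em1))^2) with (a0^2*(e0+em1)^2) by ring.
      apply Rle_trans with (h^2*(e0+em1)^2); [|nra].
      apply Rmult_le_compat_r; [apply pow2_ge_0 | nra]. }
    nra. }
  assert (H2 : ((a0-am1)*um1)*f >= -(f^2/8 + 8*h^4*um1^2)).
  { assert (0 <= (f/2 + 2*((a0-am1)*um1))^2) by apply pow2_ge_0.
    assert (((a0-am1)*um1)^2 <= 4*h^4*um1^2).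
    { replace (((a0-am1)*um1)^2) with ((a0-am1)^2*um1^2) by ring.
      apply Rmult_le_compat_r; auto. apply pow2_ge_0. }
    nra. }
  assert (H3 : 8*h^2*u0*f >= -(f^2/8 + 128*h^4*u0^2)).
  { assert (0 <= (f/2 + 16*h^2*u0)^2) by apply pow2_ge_0. nra. }
  assert (Ef : 0 <= f^2) by apply pow2_ge_0.
  assert (H4 : - /4*(am1+a0)*f^2 + c0*f^2 >= /2*f^2) by nra.
  assert (Eu0 : 0 <= u0^2) by apply pow2_ge_0.
  assert (Eum1 : 0 <= um1^2) by apply pow2_ge_0.
  assert (H5 : /4*u0^2*(a0+am1-(cm1-cm2)-(c2-c1)) >= - 6/4*h^3*u0^2) by nra.
  assert (Eh : h^4 <= h^3).
  { replace (h^4) with (h*h^3) by ring. assert (0 <= h^3) by (apply pow_le; lra). nra. }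
  assert (h^4*um1^2 <= h^3*um1^2) by (apply Rmult_le_compat_r; auto).
  assert (h^4*u0^2 <= h^3*u0^2) by (apply Rmult_le_compat_r; auto).
  nra.
Qed.

Lemma Rabs_le_half_1_sq x : Rabs x <= /2*(1 + x^2).
Proof.
  assert (0 <= (Rabs x - 1)^2) by apply pow2_ge_0.
  assert (Rabs x ^2 = x^2) by (rewrite RPow_abs; apply Rabs_right; apply Rle_ge, pow2_ge_0).
  nra.
Qed.

Lemma Rabs_mult_le_half_sq x y : Rabs (x*y) <= /2*(x^2+y^2).
Proof.
  assert (0 <= (x+y)^2) by apply pow2_ge_0. assert (0 <= (x-y)^2) by apply pow2_ge_0.
  apply Rabs_le. split; nra.
Qed.

Lemma Rabs_pow_sum_le k x y : (k = 1%nat \/ k = 2%nat) ->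
  Rabs (x^k + y^k) <= 1 + x^2 + y^2.
Proof.
  assert (0 <= x^2) by apply pow2_ge_0. assert (0 <= y^2) by apply pow2_ge_0.
  intros [-> | ->].
  - eapply Rle_trans. apply Rabs_triang. rewrite !pow_1.
    pose proof (Rabs_le_half_1_sq x). pose proof (Rabs_le_half_1_sq y). lra.
  - rewrite Rabs_right by lra. lra.
Qed.

Lemma bulk_nl_bound k h g c0 c1 u0 u1 Lam :
  (k = 1%nat \/ k = 2%nat) -> 0 < h -> 0 <= g <= 1 -> c1 - c0 = h * g^2 ->
  (g*u0)^2 <= Lam -> (g*u1)^2 <= Lam ->
  Rabs (bulk_nl k c0 c1 u0 u1) <= /2*h*(1+Lam)*(u0^2+u1^2).
Proof.
  intros Hk h0 Hg Hc Hx Hy. unfold bulk_nl. rewrite Hc.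
  assert (Hp := Rabs_mult_le_half_sq u0 u1).
  assert (0 <= Lam) by (assert (0 <= (g*u0)^2) by apply pow2_ge_0; lra).
  pose proof (pow2_ge_0 u0). pose proof (pow2_ge_0 u1).
  (* one factor [g] is absorbed into each power of [u] that the nonlinearity adds *)
  assert (Hgk : Rabs (g^2 * (u0^k+u1^k)) <= 2 * (1 + Lam)).
  { replace (g^2 * (u0^k+u1^k)) with (g^(2-k) * ((g*u0)^k + (g*u1)^k))
      by (destruct Hk as [-> | ->]; simpl; ring).
    rewrite Rabs_mult. assert (Rabs (g^(2-k)) <= 1).
    { rewrite <- RPow_abs, (Rabs_right g) by lra. destruct Hk as [E|E]; rewrite E; simpl; lra. }
    pose proof (Rabs_pos ((g*u0)^k + (g*u1)^k)).
    pose proof (Rabs_pow_sum_le k (g*u0) (g*u1) Hk).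
    pose proof (Rabs_pos (g^(2-k))). nra. }
  replace (- /2*(h*g^2)*u0*u1*(u0^k+u1^k)) with (-(/2*h) * ((u0*u1) * (g^2*(u0^k+u1^k))))
    by ring.
  rewrite Rabs_mult, Rabs_Ropp, (Rabs_right (/2*h)) by lra. rewrite Rabs_mult.
  assert (Rabs (u0*u1) * Rabs (g^2*(u0^k+u1^k)) <= /2*(u0^2+u1^2) * (2 * (1+Lam)))
    by (apply Rmult_le_compat; auto; apply Rabs_pos).
  nra.
Qed.

Lemma cross_term_bounds c x y C : Rabs c <= C ->
  - (C * (x^2 + y^2)) <= c * x * y <= C * (x^2 + y^2).
Proof.
  intros Hc.
  assert (Hp : Rabs (x*y) <= x^2 + y^2).
  { pose proof (Rabs_mult_le_half_sq x y). pose proof (pow2_ge_0 x). pose proof (pow2_ge_0 y).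
    lra. }
  assert (Rabs (c * x * y) <= C * (x^2+y^2)).
  { rewrite Rmult_assoc, Rabs_mult. apply Rmult_le_compat; auto; apply Rabs_pos. }
  pose proof (Rabs_maj2 (c*x*y)). pose proof (Rle_abs (c*x*y)). split; lra.
Qed.

Lemma flux_lin_bound h cm2 cm1 c0 c1 um2 um1 u0 u1 C :
  Rabs cm2 <= C -> Rabs cm1 <= C -> Rabs c0 <= C -> Rabs c1 <= C ->
  Rabs (flux_lin h cm2 cm1 c0 c1 um2 um1 u0 u1)
  <= (10 * C + 8 * h^2) * (um2^2 + um1^2 + u0^2 + u1^2).
Proof.
  intros H1 H2 H3 H4. unfold flux_lin.
  pose proof (cross_term_bounds cm2 u0 u0 C H1). pose proof (cross_term_bounds cm1 um1 u0 C H2).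
  pose proof (cross_term_bounds cm1 um1 u1 C H2). pose proof (cross_term_bounds cm1 um1 um1 C H2).
  pose proof (cross_term_bounds c0 um2 u0 C H3). pose proof (cross_term_bounds c0 um1 u0 C H3).
  pose proof (cross_term_bounds c0 u0 u0 C H3). pose proof (cross_term_bounds c1 um1 u0 C H4).
  pose proof (cross_term_bounds c1 um1 um1 C H4). pose proof (cross_term_bounds c1 u0 u0 C H4).
  pose proof (pow2_ge_0 h). pose proof (pow2_ge_0 um2). pose proof (pow2_ge_0 um1).
  pose proof (pow2_ge_0 u0). pose proof (pow2_ge_0 u1).
  assert (0 <= C) by (eapply Rle_trans; [apply Rabs_pos|apply H1]).
  assert (0 <= C * um2^2) by nra. assert (0 <= C * um1^2) by nra.
  assert (0 <= C * u0^2) by nra. assert (0 <= C * u1^2) by nra.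
  assert (0 <= h^2 * um1^2) by nra. assert (0 <= h^2 * u0^2) by nra.
  assert (0 <= h^2 * um2^2) by nra. assert (0 <= h^2 * u1^2) by nra.
  apply Rabs_le. split; nra.
Qed.

Lemma flux_lin1_bound um2 um1 u0 u1 :
  Rabs (flux_lin1 um2 um1 u0 u1) <= 5 * (um2^2 + um1^2 + u0^2 + u1^2).
Proof.
  unfold flux_lin1. assert (H1 : Rabs 1 <= 1) by (rewrite Rabs_R1; lra).
  pose proof (cross_term_bounds 1 um1 u0 1 H1). pose proof (cross_term_bounds 1 um1 u1 1 H1).
  pose proof (cross_term_bounds 1 um2 u0 1 H1).
  pose proof (pow2_ge_0 um2). pose proof (pow2_ge_0 um1).
  pose proof (pow2_ge_0 u0). pose proof (pow2_ge_0 u1).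
  apply Rabs_le. split; nra.
Qed.

Lemma flux_nl_bound k beta c um1 u0 C B : (k = 1%nat \/ k = 2%nat) -> Rabs c <= C ->
  um1^2 <= B -> u0^2 <= B ->
  Rabs (nl_coef k beta * flux_nl k c um1 u0) <= Rabs beta * C * (1 + 2 * B) * (um1^2 + u0^2).
Proof.
  intros Hk Hc Hb1 Hb2. unfold flux_nl.
  assert (Hs := Rabs_pow_sum_le k u0 um1 Hk).
  assert (Hp := Rabs_mult_le_half_sq um1 u0).
  pose proof (Rabs_nl_coef_le k beta).
  assert (0 <= C) by (eapply Rle_trans; [apply Rabs_pos|apply Hc]).
  replace (nl_coef k beta * (/2 * c * um1 * u0 * (u0^k + um1^k)))
    with (nl_coef k beta * (c * (/2 * ((um1 * u0) * (u0^k + um1^k))))) by ring.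
  rewrite (Rabs_mult (nl_coef k beta)), (Rabs_mult c), (Rabs_mult (/2)), (Rabs_mult (um1*u0)).
  rewrite (Rabs_right (/2)) by lra.
  assert (Rabs (um1*u0) * Rabs (u0^k+um1^k) <= (/2 * (um1^2+u0^2)) * (1 + 2*B))
    by (apply Rmult_le_compat; try apply Rabs_pos; lra).
  assert (0 <= /2 * (Rabs (um1 * u0) * Rabs (u0 ^ k + um1 ^ k)))
    by (apply Rmult_le_pos; [lra | apply Rmult_le_pos; apply Rabs_pos]).
  assert (Rabs c * (/2 * (Rabs (um1 * u0) * Rabs (u0 ^ k + um1 ^ k)))
          <= C * ((1 + 2*B) * (um1^2+u0^2))) by (apply Rmult_le_compat; try apply Rabs_pos; lra).
  replace (Rabs beta * C * (1 + 2 * B) * (um1 ^ 2 + u0 ^ 2))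
    with (Rabs beta * (C * ((1 + 2 * B) * (um1 ^ 2 + u0 ^ 2)))) by ring.
  apply Rmult_le_compat; auto; try apply Rabs_pos.
  apply Rmult_le_pos; [apply Rabs_pos | auto].
Qed.

(** * Sums over windows of integers *)

Fixpoint zsum (lo : Z) (n : nat) (f : Z -> R) : R :=
  match n with O => 0 | S m => zsum lo m f + f (lo + Z.of_nat m)%Z end.

Lemma zsum_ext lo n f g : (forall j, (lo <= j < lo + Z.of_nat n)%Z -> f j = g j) ->
  zsum lo n f = zsum lo n g.
Proof.
  induction n; intros H; simpl; auto.
  rewrite IHn by (intros j Hj; apply H; lia). rewrite H by lia. auto.
Qed.

Lemma zsum_le lo n f g : (forall j, (lo <= j < lo + Z.of_nat n)%Z -> f j <= g j) ->
  zsum lo n f <= zsum lo n g.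
Proof.
  induction n; intros H; simpl. lra.
  apply Rplus_le_compat. apply IHn. intros j Hj; apply H; lia. apply H; lia.
Qed.

Lemma zsum_const lo n a : zsum lo n (fun _ => a) = INR n * a.
Proof. induction n. simpl; lra. cbn [zsum]. rewrite IHn, S_INR. lra. Qed.

Lemma zsum_ge0 lo n f : (forall j, (lo <= j < lo + Z.of_nat n)%Z -> 0 <= f j) ->
  0 <= zsum lo n f.
Proof.
  intros H. replace 0 with (zsum lo n (fun _ => 0)) by (rewrite zsum_const; ring).
  apply zsum_le; auto.
Qed.

Lemma zsum_add lo n f g : zsum lo n (fun j => f j + g j) = zsum lo n f + zsum lo n g.
Proof. induction n; simpl. lra. rewrite IHn; lra. Qed.

Lemma zsum_sub lo n f g : zsum lo n (fun j => f j - g j) = zsum lo n f - zsum lo n g.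
Proof. induction n; simpl. lra. rewrite IHn; lra. Qed.

Lemma zsum_scal lo n a f : zsum lo n (fun j => a * f j) = a * zsum lo n f.
Proof. induction n; simpl. lra. rewrite IHn; lra. Qed.

Lemma zsum_telescope lo n X :
  zsum lo n (fun j => X (j+1)%Z - X j) = X (lo + Z.of_nat n)%Z - X lo.
Proof.
  induction n. simpl. rewrite Z.add_0_r; lra.
  cbn [zsum]. rewrite IHn, Nat2Z.inj_succ.
  replace (lo + Z.succ (Z.of_nat n))%Z with (lo + Z.of_nat n + 1)%Z by lia. lra.
Qed.

Lemma zsum_split lo n m f : zsum lo (n + m) f = zsum lo n f + zsum (lo + Z.of_nat n) m f.
Proof.
  induction m. simpl. rewrite Nat.add_0_r; lra.
  rewrite Nat.add_succ_r. cbn [zsum]. rewrite IHm.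
  replace (lo + Z.of_nat (n + m))%Z with (lo + Z.of_nat n + Z.of_nat m)%Z by lia. lra.
Qed.

Lemma zsum_shift lo n s f : zsum lo n (fun j => f (j + s)%Z) = zsum (lo + s) n f.
Proof. induction n; simpl; auto. rewrite IHn. do 2 f_equal. lia. Qed.

Lemma zsum_1 lo f : zsum lo 1 f = f lo.
Proof. simpl. rewrite Z.add_0_r. lra. Qed.

Lemma zsum_4 lo f : zsum lo 4 f = f lo + f (lo+1)%Z + f (lo+2)%Z + f (lo+3)%Z.
Proof. cbn [zsum]. simpl Z.of_nat. rewrite Z.add_0_r. ring. Qed.

Lemma zsum_subwindow lo n lo' n' f :
  (forall j, 0 <= f j) -> (lo' <= lo)%Z -> (lo + Z.of_nat n <= lo' + Z.of_nat n')%Z ->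
  zsum lo n f <= zsum lo' n' f.
Proof.
  intros Hf H1 H2.
  set (d1 := Z.to_nat (lo - lo')). set (d2 := (n' - d1 - n)%nat).
  replace n' with (d1 + n + d2)%nat by (unfold d2, d1; lia).
  rewrite (zsum_split lo' (d1+n) d2), (zsum_split lo' d1 n).
  replace (lo' + Z.of_nat d1)%Z with lo by (unfold d1; lia).
  assert (0 <= zsum lo' d1 f) by (apply zsum_ge0; auto).
  assert (0 <= zsum (lo' + Z.of_nat (d1 + n)) d2 f) by (apply zsum_ge0; auto).
  lra.
Qed.

Lemma Rabs_zsum_le lo n f : Rabs (zsum lo n f) <= zsum lo n (fun j => Rabs (f j)).
Proof.
  induction n; simpl. rewrite Rabs_R0; lra.
  eapply Rle_trans. apply Rabs_triang. lra.
Qed.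

Lemma zsum_Cauchy_Schwarz lo n x y :
  (zsum lo n (fun j => x j * y j))^2
  <= zsum lo n (fun j => x j ^ 2) * zsum lo n (fun j => y j ^ 2).
Proof.
  set (A := zsum lo n (fun j => x j ^ 2)). set (B := zsum lo n (fun j => y j ^ 2)).
  set (Cc := zsum lo n (fun j => x j * y j)).
  assert (HA : 0 <= A) by (apply zsum_ge0; intros; apply pow2_ge_0).
  assert (HB : 0 <= B) by (apply zsum_ge0; intros; apply pow2_ge_0).
  assert (Hq : forall t, 0 <= A - 2*t*Cc + t^2 * B).
  { intro t. replace (A - 2*t*Cc + t^2*B) with (zsum lo n (fun j => (x j - t * y j)^2)).
    - apply zsum_ge0; intros; apply pow2_ge_0.
    - unfold A, B, Cc. rewrite <- !zsum_scal, <- zsum_sub, <- zsum_add.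
      apply zsum_ext. intros; ring. }
  destruct (Req_dec B 0) as [HB0|HB0].
  - assert (Cc = 0).
    { destruct (Req_dec Cc 0); auto.
      specialize (Hq ((A+1)/(2*Cc))). rewrite HB0 in Hq.
      replace (A - 2 * ((A + 1) / (2 * Cc)) * Cc + ((A + 1) / (2 * Cc)) ^ 2 * 0) with (-1)
        in Hq by (field; auto). lra. }
    rewrite H, HB0. lra.
  - specialize (Hq (Cc / B)).
    replace (A - 2 * (Cc / B) * Cc + (Cc / B) ^ 2 * B) with (A - Cc^2/B) in Hq by (field; lra).
    apply Rmult_le_reg_r with (/B). apply Rinv_0_lt_compat; lra.
    replace (Cc ^ 2 * / B) with (Cc^2/B) by reflexivity.
    replace (A * B * / B) with A by (field; lra). lra.
Qed.

Lemma exists_le_average lo m f C : (0 < m)%nat -> zsum lo m f <= C ->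
  exists j, (lo <= j < lo + Z.of_nat m)%Z /\ f j <= C / INR m.
Proof.
  intros Hm H.
  destruct (Classical_Prop.classic
    (exists j, (lo <= j < lo + Z.of_nat m)%Z /\ f j <= C / INR m)) as [E|E]; auto.
  exfalso.
  assert (Hlt : forall j, (lo <= j < lo + Z.of_nat m)%Z -> C / INR m < f j).
  { intros j Hj. apply Rnot_le_lt. intro. apply E. exists j. auto. }
  assert (HINR : 0 < INR m) by (apply lt_0_INR; lia).
  assert (H1 : zsum lo m (fun _ => C / INR m) < zsum lo m f).
  { destruct m. lia. cbn [zsum]. apply Rplus_le_lt_compat.
    apply zsum_le. intros j Hj. left. apply Hlt. lia. apply Hlt. lia. }
  rewrite zsum_const in H1. replace (INR m * (C / INR m)) with C in H1 by (field; lra). lra.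
Qed.

Lemma sum_f_R0_eq_zsum f N : sum_f_R0 (fun n => f (zpos n) + f (zneg n)) N =
  zsum (- Z.of_nat N - 1) (2 * N + 2) f.
Proof.
  induction N.
  - simpl. unfold zpos, zneg. simpl. lra.
  - cbn [sum_f_R0]. rewrite IHN.
    replace (2 * S N + 2)%nat with (1 + ((2 * N + 2) + 1))%nat by lia.
    rewrite !zsum_split, !zsum_1.
    replace (- Z.of_nat (S N) - 1 + Z.of_nat 1)%Z with (- Z.of_nat N - 1)%Z by lia.
    replace (- Z.of_nat (S N) - 1)%Z with (zneg (S N)) by (unfold zneg; lia).
    replace (- Z.of_nat N - 1 + Z.of_nat (2 * N + 2))%Z with (zpos (S N)) by (unfold zpos; lia).
    lra.
Qed.

(** * Windows of grid functions in l^2 *)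

Definition l2term (h : R) (z : gridfun) (n : nat) : R :=
  h * (z (zpos n))^2 + h * (z (zneg n))^2.

Lemma l2term_ge0 h z n : 0 <= h -> 0 <= l2term h z n.
Proof.
  intros. unfold l2term.
  pose proof (pow2_ge_0 (z (zpos n))). pose proof (pow2_ge_0 (z (zneg n))). nra.
Qed.

Lemma sum_f_R0_le_Series (a : nat -> R) N : (forall n, 0 <= a n) -> ex_series a ->
  sum_f_R0 a N <= Series a.
Proof.
  intros Ha He. rewrite <- sum_n_Reals.
  assert (H := is_lim_seq_le_loc (fun _ => sum_n a N) (sum_n a) (sum_n a N) (Series a)).
  simpl in H. apply H.
  - exists N. intros n Hn. rewrite !sum_n_Reals.
    induction n. replace N with 0%nat by lia. lra.
    destruct (Nat.eq_dec N (S n)). subst; lra.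
    simpl. specialize (IHn ltac:(lia)). specialize (Ha (S n)). lra.
  - apply is_lim_seq_const.
  - apply (Series_correct a He).
Qed.

Lemma zsum_le_Series h z lo n : 0 <= h -> is_l2 h z ->
  zsum lo n (fun j => h * z j ^ 2) <= Series (l2term h z).
Proof.
  intros Hh Hz.
  set (N := Z.to_nat (Z.abs lo + Z.of_nat n)).
  apply Rle_trans with (zsum (- Z.of_nat N - 1) (2 * N + 2) (fun j => h * z j ^ 2)).
  - apply zsum_subwindow; try (unfold N; lia).
    intros; pose proof (pow2_ge_0 (z j)); nra.
  - rewrite <- sum_f_R0_eq_zsum. apply (sum_f_R0_le_Series (l2term h z)).
    intros; apply l2term_ge0; auto. exact Hz.
Qed.

Lemma l2norm_sq h z : 0 <= h -> is_l2 h z -> l2norm h z ^ 2 = Series (l2term h z).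
Proof.
  intros Hh Hz. unfold l2norm. fold (l2term h z). rewrite pow2_sqrt; auto.
  eapply Rle_trans. 2: apply (zsum_le_Series h z 0 0); auto. simpl; lra.
Qed.

Lemma zsum_le_l2norm_sq h z lo n : 0 <= h -> is_l2 h z ->
  zsum lo n (fun j => h * z j ^ 2) <= l2norm h z ^ 2.
Proof. intros. rewrite l2norm_sq by auto. apply zsum_le_Series; auto. Qed.

Lemma is_l2_lincomb h x y w a b c : 0 <= h -> is_l2 h x -> is_l2 h y -> is_l2 h w ->
  is_l2 h (fun j => a * x j + b * y j + c * w j).
Proof.
  intros Hh Hx Hy Hw. unfold is_l2.
  apply (ex_series_le (V := R_CompleteNormedModule) _
    (fun n => 3*a^2 * l2term h x n + 3*b^2 * l2term h y n + 3*c^2 * l2term h w n)).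
  - intros n. change (norm ?X) with (Rabs X).
    rewrite Rabs_right.
    2: { apply Rle_ge. apply (l2term_ge0 h (fun j => a * x j + b * y j + c * w j)); auto. }
    unfold l2term.
    assert (Hsq : forall p q r : R, (a*p+b*q+c*r)^2 <= 3*a^2*p^2 + 3*b^2*q^2 + 3*c^2*r^2).
    { intros p q r. pose proof (pow2_ge_0 (a*p-b*q)).
      pose proof (pow2_ge_0 (a*p-c*r)). pose proof (pow2_ge_0 (b*q-c*r)). nra. }
    pose proof (Hsq (x (zpos n)) (y (zpos n)) (w (zpos n))).
    pose proof (Hsq (x (zneg n)) (y (zneg n)) (w (zneg n))). nra.
  - apply (ex_series_plus (V := R_NormedModule)). apply (ex_series_plus (V := R_NormedModule)).
    + apply (ex_series_scal (V := R_NormedModule) (3*a^2)); exact Hx.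
    + apply (ex_series_scal (V := R_NormedModule) (3*b^2)); exact Hy.
    + apply (ex_series_scal (V := R_NormedModule) (3*c^2)); exact Hw.
Qed.

(** * Regularity of solutions in time *)

Lemma filterlim_within_0_Rabs (f : R -> R) (D : R -> Prop) :
  filterlim f (within D (locally 0)) (locally 0) ->
  forall eps, 0 < eps -> exists del, 0 < del /\
    forall s, Rabs s < del -> D s -> Rabs (f s) < eps.
Proof.
  intros Hf eps He.
  apply filterlim_locally with (eps := mkposreal eps He) in Hf.
  destruct Hf as [d Hd]. exists d. split. apply cond_pos.
  intros s Hs HD. specialize (Hd s). simpl in Hd.
  assert (H : ball 0 d s) by (change (Rabs (s - 0) < d); rewrite Rminus_0_r; auto).
  specialize (Hd H HD). change (Rabs (f s - 0) < eps) in Hd. rewrite Rminus_0_r in Hd. auto.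
Qed.

Definition clamp (T t : R) : R := Rmax 0 (Rmin T t).

Lemma clamp_in T t : 0 <= T -> 0 <= clamp T t <= T.
Proof. intros. unfold clamp, Rmax, Rmin. repeat destruct Rle_dec; lra. Qed.

Lemma clamp_id T t : 0 <= t <= T -> clamp T t = t.
Proof. intros. unfold clamp, Rmax, Rmin. repeat destruct Rle_dec; lra. Qed.

Lemma clamp_lipschitz T x y : 0 <= T -> Rabs (clamp T y - clamp T x) <= Rabs (y - x).
Proof.
  intros. unfold clamp, Rmax, Rmin. repeat destruct Rle_dec;
  unfold Rabs; repeat destruct Rcase_abs; lra.
Qed.

Section SolutionRegularity.
Variables (k : nat) (beta h T : R) (phi : gridfun) (u u' : R -> gridfun).
Hypotheses (Hh : 0 < h) (Hsol : is_solution k beta h T phi u u').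

Let dq t s j := (u (t + s) j - u t j) / s - u' t j.

Lemma diff_quotient_window_small t : 0 <= t <= T -> forall eps, 0 < eps ->
  exists del, 0 < del /\ forall s, Rabs s < del -> s <> 0 -> 0 <= t + s <= T ->
  forall lo n, zsum lo n (fun j => h * dq t s j ^ 2) < eps ^ 2.
Proof.
  intros Ht eps He. destruct Hsol as [_ [Hl2 [Hd _]]].
  destruct (filterlim_within_0_Rabs _ _ (Hd t Ht) eps He) as [del [Hdel Hs]].
  exists del. split; auto. intros s Hsd Hs0 Hts lo n.
  specialize (Hs s Hsd (conj Hs0 Hts)). fold (dq t s) in Hs.
  assert (Hq : is_l2 h (dq t s)).
  { replace (dq t s) with (fun j => (/s) * u (t+s) j + (-/s) * u t j + (-1) * u' t j)
      by (apply functional_extensionality; intro; unfold dq; field; auto).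
    apply is_l2_lincomb; try lra; apply Hl2; auto. }
  assert (0 <= l2norm h (dq t s)) by apply sqrt_pos.
  rewrite Rabs_right in Hs by lra.
  eapply Rle_lt_trans. apply zsum_le_l2norm_sq; auto; lra.
  simpl. nra.
Qed.

Lemma diff_quotient_small t : 0 <= t <= T -> forall j eps, 0 < eps ->
  exists del, 0 < del /\ forall s, Rabs s < del -> s <> 0 -> 0 <= t + s <= T ->
  Rabs (dq t s j) < eps.
Proof.
  intros Ht j eps He.
  assert (Hsh : 0 < sqrt h) by (apply sqrt_lt_R0; auto).
  destruct (diff_quotient_window_small t Ht (eps * sqrt h)) as [del [Hdel Hs]].
  { apply Rmult_lt_0_compat; auto. }
  exists del. split; auto. intros s Hsd Hs0 Hts.
  specialize (Hs s Hsd Hs0 Hts j 1%nat). rewrite zsum_1 in Hs.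
  rewrite Rpow_mult_distr, pow2_sqrt in Hs by lra.
  rewrite <- (Rabs_right eps) by lra. apply Rsqr_lt_abs_0. unfold Rsqr. simpl in Hs. nra.
Qed.

Lemma solution_local_lipschitz t : 0 <= t <= T -> forall j, exists del, 0 < del /\
  forall s, Rabs s < del -> 0 <= t + s <= T ->
    Rabs (u (t+s) j - u t j) <= Rabs s * (1 + Rabs (u' t j)).
Proof.
  intros Ht j.
  destruct (diff_quotient_small t Ht j 1 ltac:(lra)) as [del [Hdel Hs]].
  exists del. split; auto. intros s Hsd Hts.
  destruct (Req_dec s 0) as [->|Hs0].
  - rewrite Rplus_0_r, Rminus_diag_eq, Rabs_R0 by auto. pose proof (Rabs_pos (u' t j)). lra.
  - specialize (Hs s Hsd Hs0 Hts). unfold dq in Hs.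
    replace (u (t+s) j - u t j) with (s * ((u (t + s) j - u t j) / s - u' t j + u' t j))
      by (field; auto).
    rewrite Rabs_mult. apply Rmult_le_compat_l. apply Rabs_pos.
    eapply Rle_trans. apply Rabs_triang. lra.
Qed.

Lemma clamped_solution_continuous : 0 <= T ->
  forall j x, continuity_pt (fun t => u (clamp T t) j) x.
Proof.
  intros HT j x. set (t0 := clamp T x).
  assert (Ht0 : 0 <= t0 <= T) by (apply clamp_in; lra).
  destruct (solution_local_lipschitz t0 Ht0 j) as [del [Hdel Hl]].
  set (L := 1 + Rabs (u' t0 j)).
  assert (HL : 0 < L) by (unfold L; pose proof (Rabs_pos (u' t0 j)); lra).
  intros eps Heps. exists (Rmin del (eps / L)). split.
  { apply Rmin_pos; auto. apply Rdiv_lt_0_compat; auto. }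
  intros y [_ Hy]. simpl in *. unfold R_dist in *.
  set (s := clamp T y - t0).
  assert (Hs : Rabs s <= Rabs (y - x)) by (apply clamp_lipschitz; lra).
  replace (clamp T y) with (t0 + s) by (unfold s; ring).
  pose proof (Rmin_l del (eps/L)). pose proof (Rmin_r del (eps/L)).
  assert (Hts : 0 <= t0 + s <= T) by (unfold s; replace (t0 + _) with (clamp T y) by ring;
    apply clamp_in; lra).
  specialize (Hl s ltac:(lra) Hts). fold L in Hl.
  apply Rle_lt_trans with (Rabs s * L); auto.
  apply Rmult_lt_reg_r with (/L). apply Rinv_0_lt_compat; auto.
  replace (Rabs s * L * / L) with (Rabs s) by (field; lra).
  replace (eps * / L) with (eps / L) by reflexivity. lra.
Qed.

Lemma clamped_solution_derivative j x : 0 < x < T ->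
  derivable_pt_lim (fun t => u (clamp T t) j) x (u' x j).
Proof.
  intros Hx eps Heps.
  destruct (diff_quotient_small x ltac:(lra) j eps Heps) as [del [Hdel Hs]].
  assert (Hp : 0 < Rmin del (Rmin x (T - x))) by (repeat apply Rmin_pos; lra).
  exists (mkposreal _ Hp). intros s Hs0 Hsd. simpl in Hsd.
  pose proof (Rmin_l del (Rmin x (T-x))). pose proof (Rmin_r del (Rmin x (T-x))).
  pose proof (Rmin_l x (T-x)). pose proof (Rmin_r x (T-x)).
  assert (Hts : 0 <= x + s <= T) by (apply Rabs_def2 in Hsd; lra).
  rewrite !clamp_id by lra.
  apply Hs; auto; lra.
Qed.

Lemma solution_window_bound_near t : 0 <= t <= T -> exists del K, 0 < del /\
  forall s, 0 <= s <= T -> Rabs (s - t) < del -> forall lo n,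
    zsum lo n (fun j => h * u s j ^ 2) <= K.
Proof.
  intros Ht. destruct (diff_quotient_window_small t Ht 1 ltac:(lra)) as [del [Hdel Hq]].
  destruct Hsol as [_ [Hl2 _]]. destruct (Hl2 t Ht) as [Hu Hu'].
  set (d := Rmin del 1). assert (Hd : 0 < d) by (apply Rmin_pos; lra).
  assert (Hdd : d <= 1) by apply Rmin_r. assert (Hdd2 : d <= del) by apply Rmin_l.
  exists d, (3 * l2norm h (u t) ^ 2 + 3 + 3 * l2norm h (u' t) ^ 2).
  split; auto. intros s Hs Hst lo n.
  assert (HS1 := zsum_le_l2norm_sq h (u t) lo n ltac:(lra) Hu).
  assert (HS2 := zsum_le_l2norm_sq h (u' t) lo n ltac:(lra) Hu').
  destruct (Req_dec s t) as [->|Hne].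
  { pose proof (pow2_ge_0 (l2norm h (u' t))). pose proof (pow2_ge_0 (l2norm h (u t))). lra. }
  set (r := s - t). replace s with (t + r) by (unfold r; ring).
  specialize (Hq r ltac:(unfold r in *; lra) ltac:(unfold r; lra) ltac:(unfold r; lra) lo n).
  assert (Hr2 : r^2 <= 1).
  { assert (Hr : Rabs r < 1) by (unfold r; lra). apply Rabs_def2 in Hr. simpl. nra. }
  (* [u(t+r) = u(t) + r dq + r u'(t)] *)
  apply Rle_trans with
    (zsum lo n (fun j => 3 * (h * u t j ^ 2) + 3 * (h * dq t r j ^ 2) + 3 * (h * u' t j ^2))).
  - apply zsum_le. intros j _. unfold dq.
    set (q := (u (t + r) j - u t j) / r - u' t j).
    replace (u (t + r) j) with (u t j + r * q + r * u' t j) by (unfold q; field; unfold r; lra).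
    pose proof (pow2_ge_0 (u t j - r * q)). pose proof (pow2_ge_0 (u t j - r * u' t j)).
    pose proof (pow2_ge_0 (r * q - r * u' t j)). pose proof (pow2_ge_0 q).
    pose proof (pow2_ge_0 (u' t j)).
    assert (r^2 * q^2 <= q^2) by nra. assert (r^2 * u' t j^2 <= u' t j^2) by nra.
    nra.
  - rewrite !zsum_add, !(zsum_scal lo n 3). lra.
Qed.

(* The set of [x] up to which a uniform bound holds is open in [[0,T]] and contains its
   supremum, hence equals [[0,T]]. *)
Lemma solution_window_bound : 0 < T ->
  exists K, forall t, 0 <= t <= T -> forall lo n, zsum lo n (fun j => h * u t j ^ 2) <= K.
Proof.
  intros HT.
  set (P := fun x => exists K, forall t, 0 <= t <= x -> forall lo n,
    zsum lo n (fun j => h * u t j ^ 2) <= K).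
  set (E := fun x => 0 <= x <= T /\ P x).
  assert (HE0 : E 0).
  { split. lra. destruct (solution_window_bound_near 0 ltac:(lra)) as [d [K [Hd HK]]].
    exists K. intros t Ht lo n. apply HK. lra.
    replace (t - 0) with 0 by lra. rewrite Rabs_R0; auto. }
  assert (Hb : bound E) by (exists T; intros x [Hx _]; lra).
  destruct (completeness E Hb (ex_intro _ 0 HE0)) as [S [HS1 HS2]].
  assert (HS0 : 0 <= S) by (apply HS1; auto).
  assert (HST : S <= T) by (apply HS2; intros x [Hx _]; lra).
  destruct (solution_window_bound_near S ltac:(lra)) as [d [KS [Hd HKS]]].
  assert (Hx : exists x, E x /\ S - d < x).
  { apply Classical_Prop.NNPP. intro Hn. assert (S <= S - d); [|lra].
    apply HS2. intros x Ex. apply Rnot_lt_le. intro. apply Hn. exists x; auto. }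
  destruct Hx as [x [[Hx1 [Kx HKx]] Hxd]].
  set (y := Rmin T (S + d/2)).
  pose proof (Rmin_l T (S+d/2)). pose proof (Rmin_r T (S+d/2)).
  assert (Py : P y).
  { exists (Rmax Kx KS). intros t Ht lo n. destruct (Rle_dec t x).
    - eapply Rle_trans. apply HKx. lra. apply Rmax_l.
    - eapply Rle_trans. apply HKS. unfold y in Ht; lra.
      unfold y in Ht; apply Rabs_def1; lra. apply Rmax_r. }
  assert (Ey : E y) by (split; auto; unfold y; split; [apply Rmin_glb; lra | lra]).
  assert (Hy : y <= S) by (apply HS1; auto).
  assert (HyT : y = T) by (unfold y in *; unfold Rmin in *; destruct Rle_dec; lra).
  rewrite HyT in Py. exact Py.
Qed.

End SolutionRegularity.

(** * Continuity and integrals in time *)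

Lemma continuity_pt_plus' (A B : R -> R) x :
  continuity_pt A x -> continuity_pt B x -> continuity_pt (fun t => A t + B t) x.
Proof. apply continuity_pt_plus. Qed.
Lemma continuity_pt_minus' (A B : R -> R) x :
  continuity_pt A x -> continuity_pt B x -> continuity_pt (fun t => A t - B t) x.
Proof. apply continuity_pt_minus. Qed.
Lemma continuity_pt_mult' (A B : R -> R) x :
  continuity_pt A x -> continuity_pt B x -> continuity_pt (fun t => A t * B t) x.
Proof. apply continuity_pt_mult. Qed.
Lemma continuity_pt_opp' (A : R -> R) x :
  continuity_pt A x -> continuity_pt (fun t => - A t) x.
Proof. apply continuity_pt_opp. Qed.
Lemma continuity_pt_const' (c : R) x : continuity_pt (fun _ => c) x.
Proof. apply continuity_pt_const. intros a b; auto. Qed.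
Lemma continuity_pt_div_const (A : R -> R) c x :
  continuity_pt A x -> continuity_pt (fun t => A t / c) x.
Proof. intros; apply (continuity_pt_mult' A (fun _ => /c)); auto; apply continuity_pt_const'. Qed.
Lemma continuity_pt_pow (A : R -> R) n x :
  continuity_pt A x -> continuity_pt (fun t => A t ^ n) x.
Proof.
  intros H. induction n; simpl. apply continuity_pt_const'.
  apply (continuity_pt_mult' A (fun t => A t ^ n)); auto.
Qed.
Lemma continuity_pt_Rabs (A : R -> R) x :
  continuity_pt A x -> continuity_pt (fun t => Rabs (A t)) x.
Proof. intros. apply (continuity_pt_comp A Rabs). auto. apply Rcontinuity_abs. Qed.

Lemma zsum_continuous lo n (F : R -> Z -> R) x :
  (forall j, continuity_pt (fun t => F t j) x) -> continuity_pt (fun t => zsum lo n (F t)) x.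
Proof.
  intros H. induction n; simpl.
  - apply continuity_pt_const'.
  - apply (continuity_pt_plus' (fun t => zsum lo n (F t)) (fun t => F t (lo + Z.of_nat n)%Z));
      auto.
Qed.

Lemma zsum_derivable lo n (F dF : R -> Z -> R) x :
  (forall j, derivable_pt_lim (fun t => F t j) x (dF x j)) ->
  derivable_pt_lim (fun t => zsum lo n (F t)) x (zsum lo n (dF x)).
Proof.
  intros H. induction n; simpl.
  - apply derivable_pt_lim_const.
  - apply (derivable_pt_lim_plus (fun t => zsum lo n (F t)) (fun t => F t (lo + Z.of_nat n)%Z));
      auto.
Qed.

(* Continuity in [t] of an expression built by arithmetic, [Fop], windowed sums and [if]s
   independent of [t] from [v t j] (continuous by [Hv]) and continuous hypotheses. *)
Ltac solve_continuity Hv :=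
  match goal with
  | |- continuity_pt (fun _ => ?c) _ => apply continuity_pt_const'
  | |- continuity_pt (fun t => @?A t + @?B t) _ => apply (continuity_pt_plus' A B); solve_continuity Hv
  | |- continuity_pt (fun t => @?A t - @?B t) _ => apply (continuity_pt_minus' A B); solve_continuity Hv
  | |- continuity_pt (fun t => @?A t * @?B t) _ => apply (continuity_pt_mult' A B); solve_continuity Hv
  | |- continuity_pt (fun t => @?A t / ?c) _ => apply (continuity_pt_div_const A c); solve_continuity Hv
  | |- continuity_pt (fun t => - @?A t) _ => apply (continuity_pt_opp' A); solve_continuity Hv
  | |- continuity_pt (fun t => @?A t ^ ?n) _ => apply (continuity_pt_pow A n); solve_continuity Hv
  | |- continuity_pt (fun t => Rabs (@?A t)) _ => apply (continuity_pt_Rabs A); solve_continuity Hv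
  | |- continuity_pt (fun t => zsum ?lo ?n (fun j => @?F t j)) _ =>
      apply (zsum_continuous lo n (fun t j => F t j)); intro; solve_continuity Hv
  | |- continuity_pt (fun t => Fop _ _ _ _ _) _ =>
      unfold Fop, Dp, Dm, D0, gpow; cbv beta; solve_continuity Hv
  | |- continuity_pt (fun t => if ?b then @?A t else @?B t) _ => destruct b; solve_continuity Hv
  | |- continuity_pt _ _ =>
      first [ apply Hv | match goal with H : forall x, continuity_pt _ x |- _ => apply H end ]
  end.

Lemma ex_RInt_continuity (G : R -> R) a b : (forall x, continuity_pt G x) -> ex_RInt G a b.
Proof.
  intros H. apply (ex_RInt_continuous (V := R_CompleteNormedModule)).
  intros; apply continuity_pt_filterlim; auto.
Qed.

Lemma RInt_plus_R (f g : R -> R) a b : ex_RInt f a b -> ex_RInt g a b ->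
  RInt (fun x => f x + g x) a b = RInt f a b + RInt g a b.
Proof. intros. apply (RInt_plus (V := R_CompleteNormedModule)); auto. Qed.
Lemma RInt_minus_R (f g : R -> R) a b : ex_RInt f a b -> ex_RInt g a b ->
  RInt (fun x => f x - g x) a b = RInt f a b - RInt g a b.
Proof. intros. apply (RInt_minus (V := R_CompleteNormedModule)); auto. Qed.
Lemma RInt_scal_R (f : R -> R) a b c : ex_RInt f a b ->
  RInt (fun x => c * f x) a b = c * RInt f a b.
Proof. intros. apply (RInt_scal (V := R_CompleteNormedModule)); auto. Qed.
Lemma RInt_const_R a b c : RInt (fun _ => c) a b = (b - a) * c.
Proof. rewrite (RInt_const (V := R_CompleteNormedModule)). reflexivity. Qed.

Lemma RInt_le_continuity (f g : R -> R) a b : a <= b ->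
  (forall x, continuity_pt f x) -> (forall x, continuity_pt g x) ->
  (forall x, a <= x <= b -> f x <= g x) -> RInt f a b <= RInt g a b.
Proof.
  intros Hab Hf Hg H. apply RInt_le; auto; try (apply ex_RInt_continuity; auto).
  intros x Hx; apply H; lra.
Qed.

Lemma RInt_Rabs_bounds (f : R -> R) a b : a <= b -> (forall x, continuity_pt f x) ->
  Rabs (RInt f a b) <= RInt (fun t => Rabs (f t)) a b.
Proof.
  intros Hab Hf.
  assert (Ha : forall x, continuity_pt (fun t => Rabs (f t)) x)
    by (intro; apply continuity_pt_Rabs; auto).
  apply Rabs_le. split.
  - rewrite <- (Rmult_1_l (RInt (fun t => Rabs (f t)) a b)), Ropp_mult_distr_l.
    rewrite <- RInt_scal_R by (apply ex_RInt_continuity; auto).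
    apply RInt_le_continuity; auto.
    + intro x. apply (continuity_pt_mult' (fun _ => -1) (fun t => Rabs (f t))); auto.
      apply continuity_pt_const'.
    + intros. pose proof (Rabs_maj2 (f x)). lra.
  - apply RInt_le_continuity; auto. intros; apply Rle_abs.
Qed.

Lemma RInt_zsum (F : R -> Z -> R) lo n a b : (forall j x, continuity_pt (fun t => F t j) x) ->
  RInt (fun t => zsum lo n (F t)) a b = zsum lo n (fun j => RInt (fun t => F t j) a b).
Proof.
  intros HF. induction n.
  - simpl. rewrite RInt_const_R. ring.
  - cbn [zsum]. rewrite RInt_plus_R, IHn; auto; apply ex_RInt_continuity; intro x.
    + apply (zsum_continuous lo n F x). intro j; apply HF.
    + apply HF.
Qed.

(* Integrated form of [d/dt sum a_j v_j^2 = sum a_j 2 v_j w_j = -2 G], via the mean value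
   theorem applied to [sum a_j v_j^2 + 2 int_0^t G]. *)
Lemma zsum_energy_identity (v w : R -> Z -> R) (a : Z -> R) (G : R -> R) lo n T :
  0 < T ->
  (forall j x, continuity_pt (fun t => v t j) x) ->
  (forall j x, 0 < x < T -> derivable_pt_lim (fun t => v t j) x (w x j)) ->
  (forall x, continuity_pt G x) ->
  (forall x, 0 < x < T -> zsum lo n (fun j => a j * (2 * v x j * w x j)) = -2 * G x) ->
  zsum lo n (fun j => a j * v T j ^ 2) - zsum lo n (fun j => a j * v 0 j ^ 2)
  = -2 * RInt G 0 T.
Proof.
  intros HT Hv Hd HG Hid.
  set (I := fun t => RInt G 0 t).
  assert (HI : forall x, is_derive I x (G x)).
  { intro x. apply (is_derive_RInt G I 0 x).
    - exists (mkposreal 1 Rlt_0_1). intros y _.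
      apply (RInt_correct (V := R_CompleteNormedModule)). apply ex_RInt_continuity; auto.
    - apply continuity_pt_filterlim; auto. }
  set (Phi := fun t => zsum lo n (fun j => a j * v t j ^ 2) + 2 * I t).
  destruct (MVT_gen Phi 0 T (fun _ => 0)) as [c [Hc Hmvt]].
  - intros x Hx. rewrite Rmin_left, Rmax_right in Hx by lra.
    apply is_derive_Reals.
    replace 0 with (zsum lo n (fun j => a j * (2 * v x j * w x j)) + 2 * G x)
      by (rewrite Hid; auto; ring).
    apply (derivable_pt_lim_plus (fun t => zsum lo n (fun j => a j * v t j ^ 2)) (fun t => 2 * I t)).
    + apply (zsum_derivable lo n (fun t j => a j * v t j ^ 2) (fun x j => a j * (2 * v x j * w x j))).
      intro j. apply (derivable_pt_lim_scal (fun t => v t j ^ 2) (a j)).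
      apply is_derive_Reals.
      replace (2 * v x j * w x j) with (INR 2 * w x j * v x j ^ Nat.pred 2) by (simpl; ring).
      apply (is_derive_pow (fun t => v t j)). apply is_derive_Reals. auto.
    + apply (derivable_pt_lim_scal I 2). apply is_derive_Reals. auto.
  - intros x _. unfold Phi. apply (continuity_pt_plus' _ (fun t => 2 * I t)).
    + solve_continuity Hv.
    + apply (continuity_pt_mult' (fun _ => 2) I). apply continuity_pt_const'.
      apply continuity_pt_filterlim.
      apply (ex_derive_continuous (K := R_AbsRing) (V := R_NormedModule) I x). exists (G x). auto.
  - unfold Phi, I in *. rewrite RInt_point in Hmvt.
    change (@zero R_CompleteNormedModule) with 0 in Hmvt. lra.
Qed.

(** * The cutoff and the weight *)

Definition ramp (rho x : R) : R := Rmin 1 (rho - Rabs x).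
Definition cutoff (rho x : R) : R := Rmax 0 (ramp rho x).

Lemma cutoff_bounds rho x : 0 <= cutoff rho x <= 1.
Proof. unfold cutoff, ramp, Rmax, Rmin. repeat destruct Rle_dec; lra. Qed.

Lemma cutoff_sq_le_1 rho x : cutoff rho x ^ 2 <= 1.
Proof. pose proof (cutoff_bounds rho x). nra. Qed.

Lemma cutoff_eq_1 rho x : Rabs x <= rho - 1 -> cutoff rho x = 1.
Proof. intros. unfold cutoff, ramp, Rmax, Rmin. repeat destruct Rle_dec; lra. Qed.

Lemma cutoff_eq_0 rho x : rho <= Rabs x -> cutoff rho x = 0.
Proof. intros. unfold cutoff, ramp, Rmax, Rmin. repeat destruct Rle_dec; lra. Qed.

Ltac Rabs_cases := repeat match goal with |- context [Rabs ?z] =>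
  let H := fresh in destruct (Rle_lt_dec 0 z) as [H|H];
  [rewrite (Rabs_right z) by lra | rewrite (Rabs_left z) by lra] end;
  repeat destruct Rle_dec; try lra.

Lemma ramp_lipschitz rho x y : Rabs (ramp rho y - ramp rho x) <= Rabs (y - x).
Proof. unfold ramp, Rmin. Rabs_cases. Qed.

Lemma cutoff_lipschitz rho x y : Rabs (cutoff rho y - cutoff rho x) <= Rabs (y - x).
Proof.
  eapply Rle_trans. 2: apply (ramp_lipschitz rho x y).
  unfold cutoff. set (a := ramp rho x). set (b := ramp rho y). unfold Rmax. Rabs_cases.
Qed.

(* [ramp] is concave, being a minimum of concave functions. *)
Lemma ramp_concave rho x h : 0 < h ->
  ramp rho (x+h) - ramp rho x <= ramp rho (x-h) - ramp rho (x - 2*h).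
Proof. intros Hh. unfold ramp, Rmin. Rabs_cases. Qed.

Definition sq_pos (y : R) := Rmax 0 y ^ 2.

Lemma sq_pos_diff_le a b : sq_pos b - sq_pos a <= 2 * Rmax 0 b * (b - a).
Proof.
  unfold sq_pos, Rmax. pose proof (pow2_ge_0 (b-a)). repeat destruct Rle_dec; nra.
Qed.

Lemma sq_pos_diff_ge a b : sq_pos b - sq_pos a >= 2 * Rmax 0 a * (b - a).
Proof.
  unfold sq_pos, Rmax. pose proof (pow2_ge_0 (b-a)). repeat destruct Rle_dec; nra.
Qed.

Lemma cutoff_sq_third_difference rho x h : 0 < h ->
  cutoff rho (x+h)^2 - cutoff rho x^2 - cutoff rho (x-h)^2 + cutoff rho (x-2*h)^2 <= 6 * h^2.
Proof.
  intros Hh. change (cutoff rho ?y ^ 2) with (sq_pos (ramp rho y)).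
  set (m1 := ramp rho (x+h)). set (m0 := ramp rho x). set (mm1 := ramp rho (x-h)).
  set (mm2 := ramp rho (x-2*h)).
  assert (Hc : m1 - m0 <= mm1 - mm2) by (apply ramp_concave; auto).
  assert (Hd2 : Rabs (mm1 - mm2) <= h).
  { eapply Rle_trans. apply ramp_lipschitz.
    replace (x - h - (x - 2*h)) with h by ring. rewrite Rabs_right; lra. }
  assert (H13 : Rabs (m1 - mm2) <= 3*h).
  { eapply Rle_trans. apply ramp_lipschitz.
    replace (x + h - (x - 2*h)) with (3*h) by ring. rewrite Rabs_right; lra. }
  pose proof (sq_pos_diff_le m0 m1). pose proof (sq_pos_diff_ge mm2 mm1).
  assert (Hp1 : 0 <= Rmax 0 m1) by apply Rmax_l.
  assert (Hpl : Rabs (Rmax 0 m1 - Rmax 0 mm2) <= Rabs (m1 - mm2)) by (unfold Rmax; Rabs_cases).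
  assert (Step : 2 * Rmax 0 m1 * (m1 - m0) <= 2 * Rmax 0 m1 * (mm1 - mm2)) by nra.
  assert (Hprod : (Rmax 0 m1 - Rmax 0 mm2) * (mm1 - mm2) <= 3*h*h).
  { eapply Rle_trans. apply Rle_abs. rewrite Rabs_mult.
    apply Rmult_le_compat; try apply Rabs_pos; lra. }
  nra.
Qed.

Definition gcut (rho h : R) (j : Z) : R := cutoff rho (IZR j * h).
Definition cut_n (rho h : R) : nat := Z.to_nat (up (rho / h)).
Definition cut_lo (rho h : R) : Z := (- Z.of_nat (cut_n rho h))%Z.
Definition weight (rho h : R) (j : Z) : R :=
  1 + zsum (cut_lo rho h) (Z.to_nat (j - cut_lo rho h)) (fun i => h * gcut rho h i ^ 2).

Lemma cut_n_bounds rho h : 0 < rho -> 0 < h ->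
  rho <= INR (cut_n rho h) * h <= rho + h.
Proof.
  intros Hr Hh. unfold cut_n.
  destruct (archimed (rho / h)) as [A1 A2].
  assert (Hup : (0 < up (rho / h))%Z).
  { apply lt_IZR. assert (0 < rho / h) by (apply Rdiv_lt_0_compat; auto). lra. }
  rewrite INR_IZR_INZ, Z2Nat.id by lia.
  split; apply Rmult_le_reg_r with (/h); try (apply Rinv_0_lt_compat; auto);
    rewrite Rmult_assoc, Rinv_r, Rmult_1_r by lra.
  - unfold Rdiv in A1. lra.
  - replace ((rho + h) * / h) with (rho / h + 1) by (field; lra). lra.
Qed.

Lemma cut_lo_neg rho h : 0 < rho -> 0 < h -> (cut_lo rho h < 0)%Z.
Proof.
  intros Hr Hh. unfold cut_lo. destruct (cut_n_bounds rho h Hr Hh) as [B _].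
  assert (0 < cut_n rho h)%nat by (apply INR_lt; simpl; nra). lia.
Qed.

Lemma gcut_eq_0 rho h j : 0 < rho -> 0 < h ->
  ((j <= cut_lo rho h)%Z \/ (Z.of_nat (cut_n rho h) <= j)%Z) -> gcut rho h j = 0.
Proof.
  intros Hr Hh Hj. unfold gcut. apply cutoff_eq_0.
  destruct (cut_n_bounds rho h Hr Hh) as [B1 B2]. rewrite INR_IZR_INZ in B1.
  unfold cut_lo in Hj. destruct Hj as [Hj|Hj]; apply IZR_le in Hj.
  - rewrite opp_IZR in Hj. rewrite Rabs_left1 by nra. nra.
  - rewrite Rabs_right by nra. nra.
Qed.

Lemma gcut_sq_bounds rho h j : 0 < h -> 0 <= h * gcut rho h j ^ 2 <= h.
Proof.
  intros Hh. unfold gcut. pose proof (cutoff_sq_le_1 rho (IZR j * h)).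
  pose proof (pow2_ge_0 (cutoff rho (IZR j * h))). nra.
Qed.

Lemma gcut_lipschitz rho h j : 0 < h -> Rabs (gcut rho h (j+1) - gcut rho h j) <= h.
Proof.
  intros Hh. unfold gcut. eapply Rle_trans. apply cutoff_lipschitz.
  rewrite plus_IZR. replace ((IZR j + 1) * h - IZR j * h) with h by ring.
  rewrite Rabs_right; lra.
Qed.

Lemma weight_incr rho h j : 0 < rho -> 0 < h ->
  weight rho h (j+1) - weight rho h j = h * gcut rho h j ^ 2.
Proof.
  intros Hr Hh. unfold weight.
  destruct (Z_le_gt_dec (cut_lo rho h) j) as [Hj|Hj].
  - replace (Z.to_nat (j + 1 - cut_lo rho h)) with (S (Z.to_nat (j - cut_lo rho h))) by lia.
    cbn [zsum]. replace (cut_lo rho h + Z.of_nat (Z.to_nat (j - cut_lo rho h)))%Z with j by lia.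
    ring.
  - replace (Z.to_nat (j + 1 - cut_lo rho h)) with 0%nat by lia.
    replace (Z.to_nat (j - cut_lo rho h)) with 0%nat by lia.
    rewrite gcut_eq_0 by (auto; lia). simpl. ring.
Qed.

Lemma weight_bounds rho h j : 0 < rho -> 0 < h -> h <= 1 ->
  1 <= weight rho h j <= 2 * rho + 3.
Proof.
  intros Hr Hh H1. unfold weight.
  set (m := Z.to_nat (j - cut_lo rho h)).
  assert (0 <= zsum (cut_lo rho h) m (fun i => h * gcut rho h i ^ 2))
    by (apply zsum_ge0; intros; apply gcut_sq_bounds; auto).
  (* only the [2 n] nodes of the support of [g] contribute *)
  assert (zsum (cut_lo rho h) m (fun i => h * gcut rho h i ^ 2) <= h * INR (2 * cut_n rho h)).
  { apply Rle_trans with (zsum (cut_lo rho h) (2 * cut_n rho h + m) (fun i => h * gcut rho h i ^ 2)).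
    - apply zsum_subwindow; [intros; apply gcut_sq_bounds; auto | lia | lia].
    - rewrite zsum_split, (zsum_ext (cut_lo rho h + Z.of_nat (2 * cut_n rho h)) m _ (fun _ => 0)).
      + rewrite zsum_const, Rmult_0_r, Rplus_0_r.
        apply Rle_trans with (zsum (cut_lo rho h) (2 * cut_n rho h) (fun _ => h)).
        * apply zsum_le. intros; apply gcut_sq_bounds; auto.
        * rewrite zsum_const. lra.
      + intros i Hi. rewrite gcut_eq_0; auto. ring. right. unfold cut_lo in Hi. lia. }
  destruct (cut_n_bounds rho h Hr Hh). rewrite mult_INR in *. simpl INR in *.
  split; nra.
Qed.

Lemma weight_incr_bounds rho h j : 0 < rho -> 0 < h ->
  0 <= weight rho h (j+1) - weight rho h j <= h.
Proof. intros. rewrite weight_incr by auto. apply gcut_sq_bounds; auto. Qed.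

Lemma weight_incr_lipschitz rho h j : 0 < rho -> 0 < h ->
  Rabs ((weight rho h (j+1) - weight rho h j) - (weight rho h j - weight rho h (j + -1)))
  <= 2 * h^2.
Proof.
  intros Hr Hh. rewrite weight_incr by auto.
  replace j with ((j + -1) + 1)%Z at 2 by ring. rewrite weight_incr by auto.
  pose proof (gcut_lipschitz rho h (j + -1) Hh). replace (j + -1 + 1)%Z with j in * by ring.
  pose proof (cutoff_bounds rho (IZR j * h)). pose proof (cutoff_bounds rho (IZR (j + -1) * h)).
  unfold gcut in *.
  set (x := cutoff rho (IZR j * h)) in *. set (y := cutoff rho (IZR (j + -1) * h)) in *.
  replace (h * x ^ 2 - h * y ^ 2) with (h * ((x - y) * (x + y))) by ring.
  rewrite !Rabs_mult, (Rabs_right h), (Rabs_right (x+y)) by lra.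
  assert (Rabs (x - y) * (x + y) <= h * 2) by (apply Rmult_le_compat; try lra; apply Rabs_pos).
  nra.
Qed.

Lemma weight_incr_third_difference rho h j : 0 < rho -> 0 < h ->
  (weight rho h (j+1) - weight rho h j) + (weight rho h j - weight rho h (j + -1))
  - (weight rho h (j + -1) - weight rho h (j + -2))
  - (weight rho h (j + 2) - weight rho h (j+1)) >= - 6 * h^3.
Proof.
  intros Hr Hh.
  assert (E1 := weight_incr rho h j Hr Hh). assert (E2 := weight_incr rho h (j + -1) Hr Hh).
  assert (E3 := weight_incr rho h (j + -2) Hr Hh). assert (E4 := weight_incr rho h (j + 1) Hr Hh).
  replace (j + -1 + 1)%Z with j in E2 by ring.
  replace (j + -2 + 1)%Z with (j + -1)%Z in E3 by ring.
  replace (j + 1 + 1)%Z with (j + 2)%Z in E4 by ring.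
  rewrite E1, E2, E3, E4. unfold gcut. rewrite !plus_IZR.
  pose proof (cutoff_sq_third_difference rho (IZR j * h) h Hh).
  replace ((IZR j + IZR (-1)) * h) with (IZR j * h - h) by (simpl; ring).
  replace ((IZR j + IZR (-2)) * h) with (IZR j * h - 2 * h) by (simpl; ring).
  replace ((IZR j + IZR 1) * h) with (IZR j * h + h) by (simpl; ring).
  nra.
Qed.

(** * The multiplier identities on the grid *)

Definition bulk_lin_at (h : R) (c z : Z -> R) (j : Z) : R :=
  bulk_lin h (c (j + -2)%Z) (c (j + -1)%Z) (c j) (c (j+1)%Z) (c (j+2)%Z)
    (z (j + -1)%Z) (z j) (z (j+1)%Z).
Definition bulk_nl_at (k : nat) (c z : Z -> R) (j : Z) : R :=
  bulk_nl k (c j) (c (j+1)%Z) (z j) (z (j+1)%Z).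
Definition flux_at (k : nat) (beta h : R) (c z : Z -> R) (j : Z) : R :=
  flux_lin h (c (j + -2)%Z) (c (j + -1)%Z) (c j) (c (j+1)%Z)
    (z (j + -2)%Z) (z (j + -1)%Z) (z j) (z (j+1)%Z) / h^2
  + nl_coef k beta * flux_nl k (c j) (z (j + -1)%Z) (z j).
Definition flux1_at (k : nat) (beta h : R) (z : Z -> R) (j : Z) : R :=
  flux_lin1 (z (j + -2)%Z) (z (j + -1)%Z) (z j) (z (j+1)%Z) / h^2
  + nl_coef k beta * flux_nl k 1 (z (j + -1)%Z) (z j).

Lemma zsum_weighted_multiplier k beta h c z lo n : h <> 0 ->
  zsum lo n (fun j => h * c j * z j * Fop k beta h z j) =
  zsum lo n (fun j => bulk_lin_at h c z j / h^2 + nl_coef k beta * bulk_nl_at k c z j)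
  + flux_at k beta h c z (lo + Z.of_nat n) - flux_at k beta h c z lo.
Proof.
  intros Hh.
  rewrite (zsum_ext lo n _ (fun j =>
    (bulk_lin_at h c z j / h^2 + nl_coef k beta * bulk_nl_at k c z j)
    + (flux_at k beta h c z (j+1) - flux_at k beta h c z j))).
  - rewrite zsum_add, zsum_telescope. ring.
  - intros j _. rewrite Fop_eq_stencil by auto.
    unfold bulk_lin_at, bulk_nl_at, flux_at.
    replace (j + 1 + -2)%Z with (j + -1)%Z by ring. replace (j + 1 + -1)%Z with j by ring.
    rewrite (multiplier_identity k beta h (c (j + -2)%Z) (c (j + -1)%Z) (c j) (c (j+1)%Z)
      (c (j+2)%Z)) by auto.
    replace (j + 1 + 1)%Z with (j + 2)%Z by ring. field. auto.
Qed.

Lemma zsum_multiplier k beta h z lo n : h <> 0 ->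
  zsum lo n (fun j => h * z j * Fop k beta h z j) =
  zsum lo n (fun j => (z (j+1)%Z - 2 * z j + z (j + -1)%Z)^2 / h^2)
  + flux1_at k beta h z (lo + Z.of_nat n) - flux1_at k beta h z lo.
Proof.
  intros Hh.
  rewrite (zsum_ext lo n _ (fun j => (z (j+1)%Z - 2 * z j + z (j + -1)%Z)^2 / h^2
    + (flux1_at k beta h z (j+1) - flux1_at k beta h z j))).
  - rewrite zsum_add, zsum_telescope. ring.
  - intros j _. rewrite Fop_eq_stencil by auto. unfold flux1_at.
    replace (j + 1 + -2)%Z with (j + -1)%Z by ring. replace (j + 1 + -1)%Z with j by ring.
    replace (j + 1 + 1)%Z with (j + 2)%Z by ring.
    rewrite multiplier_identity1 by auto. field. auto.
Qed.

Lemma sq_le_of_window h z K : 0 < h ->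
  (forall lo n, zsum lo n (fun i => h * z i ^ 2) <= K) -> forall i, z i ^ 2 <= K / h.
Proof.
  intros Hh HK i. specialize (HK i 1%nat). rewrite zsum_1 in HK.
  apply Rmult_le_reg_l with h; auto. field_simplify; lra.
Qed.

Lemma stencil_flux_bound k beta h c L A C K a b cc d :
  (k = 1%nat \/ k = 2%nat) -> 0 < h -> Rabs c <= C ->
  Rabs L <= A * (a^2 + b^2 + cc^2 + d^2) -> b^2 <= K/h -> cc^2 <= K/h ->
  Rabs (L / h^2 + nl_coef k beta * flux_nl k c b cc)
  <= (A / h^3 + Rabs beta * C * (1 + 2 * (K/h)) / h) * (h*a^2 + h*b^2 + h*cc^2 + h*d^2).
Proof.
  intros Hk Hh Hc HL Hb Hcc.
  pose proof (pow2_ge_0 a). pose proof (pow2_ge_0 b).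
  pose proof (pow2_ge_0 cc). pose proof (pow2_ge_0 d).
  assert (0 <= C) by (eapply Rle_trans; [apply Rabs_pos|apply Hc]).
  assert (Hh2 : 0 < h^2) by (apply pow_lt; auto).
  eapply Rle_trans. apply Rabs_triang.
  assert (HX1 : Rabs (L / h^2) <= A / h^3 * (h*a^2 + h*b^2 + h*cc^2 + h*d^2)).
  { unfold Rdiv. rewrite Rabs_mult, (Rabs_right (/h^2))
      by (apply Rle_ge; left; apply Rinv_0_lt_compat; auto).
    apply Rle_trans with (A * (a^2+b^2+cc^2+d^2) * /h^2).
    - apply Rmult_le_compat_r; auto. left; apply Rinv_0_lt_compat; auto.
    - right. field. lra. }
  assert (HX2 := flux_nl_bound k beta c b cc C (K/h) Hk Hc Hb Hcc).
  assert (0 <= Rabs beta * C * (1 + 2 * (K / h)))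
    by (pose proof (Rabs_pos beta); apply Rmult_le_pos; [apply Rmult_le_pos|]; lra).
  rewrite Rmult_plus_distr_r. apply Rplus_le_compat; auto.
  replace (Rabs beta * C * (1 + 2 * (K / h)) / h * (h*a^2 + h*b^2 + h*cc^2 + h*d^2))
    with (Rabs beta * C * (1 + 2 * (K / h)) * (a^2 + b^2 + cc^2 + d^2)) by (field; lra).
  eapply Rle_trans. apply HX2. nra.
Qed.

Lemma flux_at_bound k beta h c z j K C : (k = 1%nat \/ k = 2%nat) -> 0 < h ->
  (forall i, Rabs (c i) <= C) ->
  (forall lo n, zsum lo n (fun i => h * z i ^ 2) <= K) ->
  Rabs (flux_at k beta h c z j) <=
    ((10 * C + 8 * h^2) / h^3 + Rabs beta * C * (1 + 2 * (K/h)) / h)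
    * zsum (j + -2) 4 (fun i => h * z i ^ 2).
Proof.
  intros Hk Hh Hc HK. pose proof (sq_le_of_window h z K Hh HK) as Hz.
  rewrite zsum_4. replace (j + -2 + 1)%Z with (j + -1)%Z by ring.
  replace (j + -2 + 2)%Z with j by ring. replace (j + -2 + 3)%Z with (j + 1)%Z by ring.
  apply stencil_flux_bound; auto. apply flux_lin_bound; auto.
Qed.

Lemma flux1_at_bound k beta h z j K : (k = 1%nat \/ k = 2%nat) -> 0 < h ->
  (forall lo n, zsum lo n (fun i => h * z i ^ 2) <= K) ->
  Rabs (flux1_at k beta h z j) <=
    (5 / h^3 + Rabs beta * 1 * (1 + 2 * (K/h)) / h) * zsum (j + -2) 4 (fun i => h * z i ^ 2).
Proof.
  intros Hk Hh HK. pose proof (sq_le_of_window h z K Hh HK) as Hz.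
  rewrite zsum_4. replace (j + -2 + 1)%Z with (j + -1)%Z by ring.
  replace (j + -2 + 2)%Z with j by ring. replace (j + -2 + 3)%Z with (j + 1)%Z by ring.
  apply stencil_flux_bound; auto. rewrite Rabs_R1; lra. apply flux_lin1_bound.
Qed.

Lemma flux_const_ge0 beta h A C K : 0 < h -> 0 <= A -> 0 <= C -> 0 <= K ->
  0 <= A / h^3 + Rabs beta * C * (1 + 2 * (K/h)) / h.
Proof.
  intros Hh HA HC HK. assert (0 < h^3) by (apply pow_lt; auto). pose proof (Rabs_pos beta).
  assert (0 <= K/h) by (apply Rdiv_le_0_compat; lra).
  assert (0 <= Rabs beta * C * (1 + 2 * (K/h))) by (apply Rmult_le_pos; nra).
  assert (0 <= A / h^3) by (apply Rdiv_le_0_compat; lra).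
  assert (0 <= Rabs beta * C * (1 + 2 * (K / h)) / h) by (apply Rdiv_le_0_compat; lra). lra.
Qed.

(** * The weighted multiplier estimate *)

Lemma zsum_pair_sq_le h w z M lo m : 0 < h -> (forall i, w i ^ 2 <= z i ^ 2) ->
  (forall lo n, zsum lo n (fun j => h * z j ^ 2) <= M^2) ->
  zsum lo m (fun i => (h * (w (i+1)%Z + w i))^2) <= 4 * h * M^2.
Proof.
  intros Hh Hw HL2.
  apply Rle_trans with
    (zsum lo m (fun i => 2 * h * (h * z (i+1)%Z ^2) + 2 * h * (h * z i ^ 2))).
  - apply zsum_le. intros i _. pose proof (Hw i). pose proof (Hw (i+1)%Z).
    pose proof (pow2_ge_0 (w (i+1)%Z - w i)). pose proof (pow2_ge_0 h).
    replace ((h * (w (i + 1)%Z + w i)) ^ 2) with (h^2 * (w (i+1)%Z + w i)^2) by ring.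
    apply Rle_trans with (h^2 * (2 * z (i+1)%Z ^2 + 2 * z i ^2)).
    + apply Rmult_le_compat_l; nra.
    + right; ring.
  - rewrite zsum_add, (zsum_scal _ _ (2*h) (fun j => h * z (j+1)%Z ^2)),
      (zsum_scal _ _ (2*h) (fun j => h * z j ^2)), (zsum_shift lo m 1 (fun i => h * z i ^ 2)).
    pose proof (HL2 (lo + 1)%Z m). pose proof (HL2 lo m). nra.
Qed.

(* Discrete Gagliardo-Nirenberg: [w_j^2 = sum_(lo0 <= i < j) (D+ w)_i h (w_(i+1) + w_i)]
   by telescoping from [w_lo0 = 0], then Cauchy-Schwarz. *)
Lemma sq_le_l2_grad h w z M lo0 j lo n : 0 < h -> 0 <= M ->
  (forall i, w i ^ 2 <= z i ^ 2) ->
  (forall lo n, zsum lo n (fun j => h * z j ^ 2) <= M^2) ->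
  w lo0 = 0 -> (lo <= lo0 <= j)%Z -> (j <= lo + Z.of_nat n)%Z ->
  w j ^ 2 <= 2 * M * sqrt (zsum lo n (fun i => h * Dp h w i ^ 2)).
Proof.
  intros Hh HM Hw HL2 Hw0 Hj Hjn.
  set (Y := zsum lo n (fun i => h * Dp h w i ^ 2)).
  set (m := Z.to_nat (j - lo0)).
  assert (Htel := zsum_telescope lo0 m (fun i => w i ^ 2)).
  replace (lo0 + Z.of_nat m)%Z with j in Htel by (unfold m; lia).
  rewrite Hw0 in Htel. simpl in Htel. rewrite Rmult_0_l, Rminus_0_r in Htel.
  rewrite (zsum_ext _ _ _ (fun i => Dp h w i * (h * (w (i+1)%Z + w i)))) in Htel
    by (intros i _; unfold Dp; field; lra).
  assert (HCS := zsum_Cauchy_Schwarz lo0 m (Dp h w) (fun i => h * (w (i+1)%Z + w i))).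
  cbv beta in HCS. rewrite Htel in HCS.
  assert (H1 : zsum lo0 m (fun i => Dp h w i ^ 2) <= Y / h).
  { apply Rle_trans with (zsum lo n (fun i => Dp h w i ^ 2)).
    - apply zsum_subwindow; [intros; apply pow2_ge_0 | lia | unfold m; lia].
    - unfold Y. rewrite zsum_scal. apply Req_le. field. lra. }
  assert (H2 := zsum_pair_sq_le h w z M lo0 m Hh Hw HL2).
  assert (H4 : (w j ^ 2) ^ 2 <= 4 * M^2 * Y).
  { eapply Rle_trans. apply HCS.
    apply Rle_trans with ((Y / h) * (4 * h * M^2)).
    - apply Rmult_le_compat; auto; apply zsum_ge0; intros; apply pow2_ge_0.
    - right. field. lra. }
  pose proof (pow2_ge_0 (w j)). pose proof (pow2_ge_0 M).
  rewrite <- (sqrt_pow2 (w j ^ 2)) by auto.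
  replace (2 * M * sqrt Y) with (sqrt (4 * M^2 * Y)).
  - apply sqrt_le_1_alt; auto.
  - rewrite sqrt_mult_alt by lra. replace (4 * M^2) with ((2*M)^2) by ring.
    rewrite sqrt_pow2 by lra. auto.
Qed.

Definition local_grad_sq (rho h : R) (z : Z -> R) (lo : Z) (n : nat) : R :=
  zsum lo n (fun j => h * gcut rho h (j+1) ^ 2 * Dp h z j ^ 2).

Lemma local_grad_sq_ge0 rho h z lo n : 0 <= h -> 0 <= local_grad_sq rho h z lo n.
Proof.
  intros Hh. apply zsum_ge0. intros.
  apply Rmult_le_pos; [apply Rmult_le_pos; [lra | apply pow2_ge_0] | apply pow2_ge_0].
Qed.

Definition smoothing_const (beta M : R) : R :=
  139 * M^2 + Rabs beta * M^2 * (1 + 2 * M^2) + 64 * beta^2 * M^6.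

Section WeightedMultiplier.
Variables (k : nat) (beta h rho M : R) (z : Z -> R).
Hypotheses (Hk : k = 1%nat \/ k = 2%nat) (Hh : 0 < h) (Hh1 : h <= 1) (Hr : 0 < rho)
  (HM : 0 <= M) (HL2 : forall lo n, zsum lo n (fun j => h * z j ^ 2) <= M^2).

Let c := weight rho h.
Let v j := gcut rho h j * z j.
Let Y lo n := zsum lo n (fun i => h * Dp h v i ^ 2).

Lemma bulk_lin_at_lower j : bulk_lin_at h c z j / h^2 >=
  /2 * (h * gcut rho h (j+1) ^ 2 * Dp h z j ^ 2)
  - 8 * (h * z (j + -1)%Z ^ 2) - 130 * (h * z j ^ 2).
Proof.
  unfold bulk_lin_at, c.
  assert (A1 := weight_incr_bounds rho h (j + -2) Hr Hh).
  assert (A2 := weight_incr_bounds rho h (j + -1) Hr Hh).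
  assert (A3 := weight_incr_bounds rho h j Hr Hh).
  assert (A4 := weight_incr_bounds rho h (j+1) Hr Hh).
  assert (E4 := weight_incr rho h (j+1) Hr Hh).
  replace (j + -2 + 1)%Z with (j + -1)%Z in A1 by ring.
  replace (j + -1 + 1)%Z with j in A2 by ring.
  replace (j + 1 + 1)%Z with (j + 2)%Z in A4, E4 by ring.
  assert (Hw := weight_bounds rho h j Hr Hh Hh1).
  assert (HL := bulk_lin_lower h (weight rho h (j + -2)) (weight rho h (j + -1)) (weight rho h j)
    (weight rho h (j+1)) (weight rho h (j+2)) (z (j + -1)%Z) (z j) (z (j+1)%Z) Hh Hh1
    (proj1 Hw) A1 A2 A3 A4 (weight_incr_lipschitz rho h j Hr Hh)
    (weight_incr_third_difference rho h j Hr Hh)).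
  assert (Hh2 : 0 < h^2) by (apply pow_lt; auto).
  apply Rmult_ge_compat_r with (r := /h^2) in HL; [|left; apply Rinv_0_lt_compat; auto].
  unfold Rdiv. eapply Rge_trans. apply HL.
  set (d := z (j+1)%Z - z j). set (s := weight rho h j - weight rho h (j + -1)
    + (weight rho h (j + 1) - weight rho h j) + (weight rho h (j + 2) - weight rho h (j + 1))).
  replace ((/ 2 * s * d ^ 2 - 8 * h ^ 3 * z (j + -1)%Z ^ 2 - 130 * h ^ 3 * z j ^ 2) * / h ^ 2)
    with (/2 * s * (d^2 / h^2) - 8 * (h * z (j + -1)%Z ^ 2) - 130 * (h * z j ^ 2))
    by (field; lra).
  unfold Dp. fold d. replace ((d / h)^2) with (d^2/h^2) by (field; lra).
  assert (0 <= d^2/h^2) by (apply Rdiv_le_0_compat; auto; apply pow2_ge_0).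
  assert (h * gcut rho h (j + 1) ^ 2 * (d^2/h^2) <= s * (d^2/h^2))
    by (apply Rmult_le_compat_r; auto; unfold s; lra).
  lra.
Qed.

Lemma zsum_bulk_lin_lower lo n :
  zsum lo n (fun j => bulk_lin_at h c z j / h^2) >= /2 * local_grad_sq rho h z lo n - 138 * M^2.
Proof.
  apply Rle_ge. eapply Rle_trans. 2: apply zsum_le; intros j _; apply Rge_le, bulk_lin_at_lower.
  rewrite !zsum_sub, (zsum_scal _ _ (/2)), (zsum_scal _ _ 8), (zsum_scal _ _ 130).
  rewrite (zsum_shift lo n (-1) (fun i => h * z i ^ 2)).
  unfold local_grad_sq. pose proof (HL2 (lo + -1) n). pose proof (HL2 lo n). lra.
Qed.

Lemma cut_sq_le j : v j ^ 2 <= z j ^ 2.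
Proof.
  unfold v, gcut. pose proof (cutoff_sq_le_1 rho (IZR j * h)).
  rewrite Rpow_mult_distr. pose proof (pow2_ge_0 (z j)). nra.
Qed.

Lemma cut_sq_le_grad j lo n :
  (lo <= cut_lo rho h)%Z -> (Z.of_nat (cut_n rho h) <= lo + Z.of_nat n)%Z ->
  v j ^ 2 <= 2 * M * sqrt (Y lo n).
Proof.
  intros Hlo Hhi. pose proof (sqrt_pos (Y lo n)).
  destruct (Z_le_gt_dec j (cut_lo rho h)) as [Hj|Hj].
  { unfold v. rewrite gcut_eq_0 by (auto; lia). simpl. nra. }
  destruct (Z_le_gt_dec (Z.of_nat (cut_n rho h)) j) as [Hj2|Hj2].
  { unfold v. rewrite gcut_eq_0 by (auto; lia). simpl. nra. }
  apply (sq_le_l2_grad h v z M (cut_lo rho h)); auto.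
  - exact cut_sq_le.
  - unfold v. rewrite gcut_eq_0 by (auto; lia). ring.
  - lia.
  - lia.
Qed.

Lemma cut_grad_le lo n : Y lo n <= 2 * local_grad_sq rho h z lo n + 2 * M^2.
Proof.
  unfold Y, local_grad_sq.
  apply Rle_trans with (zsum lo n (fun i =>
    2 * (h * gcut rho h (i+1) ^ 2 * Dp h z i ^ 2) + 2 * (h * z i ^ 2))).
  - apply zsum_le. intros i _. unfold v, Dp.
    set (g1 := gcut rho h (i+1)). set (g0 := gcut rho h i).
    (* discrete Leibniz rule: [D+(g z) = g_(i+1) D+ z + z_i D+ g] with [|D+ g| <= 1] *)
    replace ((g1 * z (i + 1)%Z - g0 * z i) / h)
      with (g1 * ((z (i + 1)%Z - z i) / h) + z i * ((g1 - g0)/h)) by (field; lra).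
    set (p := g1 * ((z (i + 1)%Z - z i) / h)). set (q := (g1 - g0)/h).
    assert (Hq : q^2 <= 1).
    { assert (Hg := gcut_lipschitz rho h i Hh). fold g1 g0 in Hg.
      unfold q. apply Rabs_le_between' in Hg. 
      replace (((g1 - g0) / h)^2) with ((g1-g0)^2 / h^2) by (field; lra).
      apply Rmult_le_reg_r with (h^2); [apply pow_lt; auto|].
      unfold Rdiv. rewrite Rmult_assoc, Rinv_l by (apply pow_nonzero; lra). simpl. nra. }
    pose proof (pow2_ge_0 (p - z i * q)). pose proof (pow2_ge_0 (z i)).
    assert (z i ^2 * q^2 <= z i ^2) by nra.
    replace (h * g1 ^ 2 * ((z (i + 1)%Z - z i) / h) ^ 2) with (h * p^2) by (unfold p; ring).
    apply Rle_trans with (h * (2*p^2 + 2*z i^2)); [apply Rmult_le_compat_l; nra | lra].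
  - rewrite zsum_add, !(zsum_scal _ _ 2). pose proof (HL2 lo n). lra.
Qed.

Let Lam lo n := 4 * M * sqrt (Y lo n) + 2 * M^2.

Lemma cut_shift_sq_le j lo n :
  (lo <= cut_lo rho h)%Z -> (Z.of_nat (cut_n rho h) <= lo + Z.of_nat n)%Z ->
  (gcut rho h j * z j)^2 <= Lam lo n /\ (gcut rho h j * z (j+1)%Z)^2 <= Lam lo n.
Proof.
  intros H1 H2. unfold Lam. pose proof (sqrt_pos (Y lo n)). pose proof (pow2_ge_0 M).
  assert (G0 := cut_sq_le_grad j lo n H1 H2). assert (G1 := cut_sq_le_grad (j+1) lo n H1 H2).
  unfold v in G0, G1. assert (0 <= M * sqrt (Y lo n)) by (apply Rmult_le_pos; auto).
  split; [lra|].
  set (g1 := gcut rho h (j+1)) in *. set (g0 := gcut rho h j).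
  assert (Hg : (g0 - g1)^2 <= h^2).
  { assert (Hl := gcut_lipschitz rho h j Hh). fold g0 g1 in Hl.
    apply Rabs_le_between' in Hl. nra. }
  assert (Hz : h * z (j+1)%Z ^ 2 <= M^2) by (pose proof (HL2 (j+1) 1); rewrite zsum_1 in *; lra).
  replace (g0 * z (j+1)%Z) with (g1 * z (j+1)%Z + (g0 - g1) * z (j+1)%Z) by ring.
  set (a := g1 * z (j+1)%Z). set (b := (g0 - g1) * z (j + 1)%Z).
  pose proof (pow2_ge_0 (a - b)). pose proof (pow2_ge_0 (z (j+1)%Z)).
  assert (b^2 <= M^2).
  { unfold b. rewrite Rpow_mult_distr.
    apply Rle_trans with (h^2 * z (j+1)%Z ^ 2); [apply Rmult_le_compat_r; auto|].
    replace (h^2 * z (j+1)%Z ^ 2) with (h * (h * z (j+1)%Z ^ 2)) by ring.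
    assert (0 <= h * z (j+1)%Z ^ 2) by (apply Rmult_le_pos; lra). nra. }
  assert ((a + b)^2 <= 2 * a^2 + 2 * b^2) by nra.
  assert (a^2 <= 2 * M * sqrt (Y lo n)) by exact G1.
  lra.
Qed.

Lemma Rabs_zsum_bulk_nl_le lo n :
  (lo <= cut_lo rho h)%Z -> (Z.of_nat (cut_n rho h) <= lo + Z.of_nat n)%Z ->
  Rabs (zsum lo n (fun j => nl_coef k beta * bulk_nl_at k c z j))
  <= Rabs beta * (1 + Lam lo n) * M^2.
Proof.
  intros H1 H2.
  assert (HL0 : 0 <= Lam lo n)
    by (unfold Lam; pose proof (sqrt_pos (Y lo n)); pose proof (pow2_ge_0 M); nra).
  eapply Rle_trans. apply Rabs_zsum_le.
  apply Rle_trans with (zsum lo n (fun j =>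
    Rabs beta * (/2 * (1 + Lam lo n)) * (h * z j ^ 2)
    + Rabs beta * (/2 * (1 + Lam lo n)) * (h * z (j+1)%Z ^ 2))).
  - apply zsum_le. intros j _. rewrite Rabs_mult.
    destruct (cut_shift_sq_le j lo n H1 H2) as [B1 B2].
    assert (HQ := bulk_nl_bound k h (gcut rho h j) (c j) (c (j+1)%Z) (z j) (z (j+1)%Z) (Lam lo n)
      Hk Hh (cutoff_bounds rho (IZR j * h)) (weight_incr rho h j Hr Hh) B1 B2).
    pose proof (Rabs_nl_coef_le k beta).
    apply Rle_trans with (Rabs beta * (/ 2 * h * (1 + Lam lo n) * (z j ^ 2 + z (j + 1)%Z ^ 2))).
    + apply Rmult_le_compat; auto; apply Rabs_pos.
    + right; ring.
  - rewrite zsum_add, (zsum_scal _ _ _ (fun j => h * z j ^ 2)),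
      (zsum_scal _ _ _ (fun j => h * z (j+1)%Z ^ 2)), (zsum_shift lo n 1 (fun i => h * z i ^ 2)).
    pose proof (HL2 lo n). pose proof (HL2 (lo+1) n).
    assert (0 <= Rabs beta * (/2 * (1 + Lam lo n))) by (pose proof (Rabs_pos beta); nra).
    nra.
Qed.

Lemma weighted_multiplier_lower lo n :
  (lo <= cut_lo rho h)%Z -> (Z.of_nat (cut_n rho h) <= lo + Z.of_nat n)%Z ->
  zsum lo n (fun j => h * c j * z j * Fop k beta h z j)
  >= /4 * local_grad_sq rho h z lo n - smoothing_const beta M
     + (flux_at k beta h c z (lo + Z.of_nat n) - flux_at k beta h c z lo).
Proof.
  intros H1 H2.
  rewrite zsum_weighted_multiplier, zsum_add by lra.
  assert (HQ := zsum_bulk_lin_lower lo n).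
  assert (HN := Rabs_zsum_bulk_nl_le lo n H1 H2).
  pose proof (Rabs_maj2 (zsum lo n (fun j => nl_coef k beta * bulk_nl_at k c z j))).
  assert (HY := cut_grad_le lo n).
  assert (Hsq : sqrt (Y lo n) * sqrt (Y lo n) = Y lo n)
    by (apply sqrt_sqrt; apply zsum_ge0; intros; apply Rmult_le_pos; [lra|apply pow2_ge_0]).
  (* Young: the nonlinear term costs [Y/16] plus a constant *)
  assert (Hw : 4 * Rabs beta * M^3 * sqrt (Y lo n) <= Y lo n / 16 + 64 * beta^2 * M^6).
  { pose proof (pow2_ge_0 (sqrt (Y lo n) / 4 - 8 * Rabs beta * M^3)).
    assert (Hb2 : Rabs beta ^ 2 = beta ^2)
      by (rewrite RPow_abs; apply Rabs_right, Rle_ge, pow2_ge_0).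
    assert (Heq : (sqrt (Y lo n) / 4 - 8 * Rabs beta * M^3)^2 = (sqrt (Y lo n) * sqrt (Y lo n))/16
      - 4 * Rabs beta * M^3 * sqrt (Y lo n) + 64 * (Rabs beta ^ 2) * M^6) by field.
    rewrite Hsq, Hb2 in Heq. lra. }
  assert (Rabs beta * (1 + Lam lo n) * M^2
          = Rabs beta * M^2 * (1 + 2*M^2) + 4 * Rabs beta * M^3 * sqrt (Y lo n)) by (unfold Lam; ring).
  assert (0 <= local_grad_sq rho h z lo n) by (apply local_grad_sq_ge0; lra).
  unfold smoothing_const. pose proof (pow2_ge_0 M). lra.
Qed.

End WeightedMultiplier.

(** * Small boundary fluxes and local sums *)

Lemma exists_small_terms_beyond (f : Z -> R) A :
  (forall lo m, zsum lo m f <= A) -> forall eps, 0 < eps -> forall j0,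
  (exists j, (j0 <= j)%Z /\ f j <= eps) /\ (exists j, (j <= j0)%Z /\ f j <= eps).
Proof.
  intros Hsum eps Heps j0.
  assert (HA : 0 <= A) by (specialize (Hsum 0%Z 0%nat); simpl in Hsum; lra).
  destruct (archimed (A / eps)) as [Ar _].
  set (m := S (Z.to_nat (up (A / eps)))).
  assert (Hm : A / INR m <= eps).
  { unfold m. rewrite S_INR, INR_IZR_INZ.
    assert (0 <= A / eps) by (apply Rdiv_le_0_compat; lra).
    rewrite Z2Nat.id by (apply le_IZR; lra).
    apply Rmult_le_reg_r with (IZR (up (A / eps)) + 1). lra.
    unfold Rdiv. rewrite Rmult_assoc, Rinv_l by lra.
    apply Rmult_le_reg_r with (/eps). apply Rinv_0_lt_compat; lra.
    replace (eps * (IZR (up (A * / eps)) + 1) * / eps) with (IZR (up (A * / eps)) + 1)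
      by (field; lra).
    unfold Rdiv in Ar. lra. }
  split.
  - destruct (exists_le_average j0 m f A ltac:(unfold m; lia) (Hsum j0 m)) as [j [Hj1 Hj2]].
    exists j. split; [lia | lra].
  - destruct (exists_le_average (j0 - Z.of_nat m + 1) m f A ltac:(unfold m; lia) (Hsum _ m))
      as [j [Hj1 Hj2]].
    exists j. split; [lia | lra].
Qed.

Lemma zsum_window4_le j0 m w K : (forall lo n, zsum lo n w <= K) ->
  zsum j0 m (fun j => zsum (j + -2) 4 w) <= 4 * K.
Proof.
  intros HK.
  rewrite (zsum_ext _ _ _ (fun j => w (j + -2)%Z + w (j + -1)%Z + w (j + 0)%Z + w (j + 1)%Z)).
  - rewrite !zsum_add, !zsum_shift.
    pose proof (HK (j0 + -2)%Z m). pose proof (HK (j0 + -1)%Z m). pose proof (HK (j0 + 0)%Z m).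
    pose proof (HK (j0 + 1)%Z m). lra.
  - intros j _. rewrite zsum_4. replace (j + -2 + 1)%Z with (j + -1)%Z by ring.
    replace (j + -2 + 2)%Z with (j + 0)%Z by ring. replace (j + -2 + 3)%Z with (j + 1)%Z by ring.
    ring.
Qed.

(* A flux dominated by the local mass has time integrals that are small at some nodes
   arbitrarily far out on both sides; the windows of the energy identities end there. *)
Lemma exists_small_flux_ends (X : R -> Z -> R) (w : R -> Z -> R) Cb K t1 :
  0 < t1 -> 0 <= Cb ->
  (forall j x, continuity_pt (fun t => X t j) x) ->
  (forall t j, Rabs (X t j) <= Cb * zsum (j + -2) 4 (w t)) ->
  (forall t lo n, zsum lo n (w t) <= K) ->
  forall eps, 0 < eps -> forall lo' hi', exists lo hi, (lo <= lo')%Z /\ (hi' <= hi)%Z /\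
    RInt (fun t => Rabs (X t lo)) 0 t1 <= eps /\ RInt (fun t => Rabs (X t hi)) 0 t1 <= eps.
Proof.
  intros Ht1 HCb HX HB HK eps Heps lo' hi'.
  assert (HK0 : 0 <= K).
  { eapply Rle_trans; [|apply (HK 0 0%Z 0%nat)]; simpl; lra. }
  assert (Hcont : forall j x, continuity_pt (fun t => Rabs (X t j)) x)
    by (intros; apply continuity_pt_Rabs; auto).
  assert (Hsum : forall lo m, zsum lo m (fun j => RInt (fun t => Rabs (X t j)) 0 t1)
                              <= 4 * Cb * K * t1).
  { intros lo m. rewrite <- RInt_zsum by auto.
    apply Rle_trans with (RInt (fun _ => Cb * (4 * K)) 0 t1).
    - apply RInt_le_continuity; try lra.
      + intro x. apply (zsum_continuous lo m (fun t j => Rabs (X t j))). auto.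
      + intros; apply continuity_pt_const'.
      + intros t _.
        apply Rle_trans with (zsum lo m (fun j => Cb * zsum (j + -2) 4 (w t))).
        * apply zsum_le. intros; apply HB.
        * rewrite zsum_scal. apply Rmult_le_compat_l; auto. apply zsum_window4_le. apply HK.
    - rewrite RInt_const_R. lra. }
  destruct (exists_small_terms_beyond _ _ Hsum eps Heps hi') as [[hi [Hhi Ihi]] _].
  destruct (exists_small_terms_beyond _ _ Hsum eps Heps lo') as [_ [lo [Hlo Ilo]]].
  exists lo, hi. auto.
Qed.

Lemma local_sum_eq_zsum h Rr w : local_sum h Rr w =
  zsum (- Z.of_nat (Z.to_nat (up (Rr / h))) - 1) (2 * Z.to_nat (up (Rr / h)) + 2)
    (fun j => if Rle_dec (Rabs (IZR j * h)) Rr then h * w j ^ 2 else 0).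
Proof.
  apply (sum_f_R0_eq_zsum (fun j => if Rle_dec (Rabs (IZR j * h)) Rr then h * w j ^ 2 else 0)).
Qed.

Lemma local_sum_continuous h Rr (w : R -> Z -> R) x :
  (forall j x, continuity_pt (fun t => w t j) x) ->
  continuity_pt (fun t => local_sum h Rr (w t)) x.
Proof.
  intros Hw.
  replace (fun t => local_sum h Rr (w t)) with (fun t =>
    zsum (- Z.of_nat (Z.to_nat (up (Rr / h))) - 1) (2 * Z.to_nat (up (Rr / h)) + 2)
    (fun j => if Rle_dec (Rabs (IZR j * h)) Rr then h * w t j ^ 2 else 0)).
  - solve_continuity Hw.
  - apply functional_extensionality. intro t. rewrite local_sum_eq_zsum. reflexivity.
Qed.

(* The cutoff of radius [Rr + 3] equals 1 on [|x| <= Rr + 2], which contains the nodes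
   [j] and [j + 1] for [|j h| <= Rr] when [h <= 1]. *)
Lemma local_sum_Dp_le h Rr z lo n : 0 < h -> h <= 1 ->
  (lo <= - Z.of_nat (Z.to_nat (up (Rr / h))) - 1)%Z ->
  (Z.of_nat (Z.to_nat (up (Rr / h))) + 1 <= lo + Z.of_nat n)%Z ->
  local_sum h Rr (Dp h z) <= local_grad_sq (Rr + 3) h z lo n.
Proof.
  intros Hh Hh1 Hlo Hhi. rewrite local_sum_eq_zsum. unfold local_grad_sq.
  set (P := fun j => h * gcut (Rr + 3) h (j + 1) ^ 2 * Dp h z j ^ 2).
  assert (HP : forall j, 0 <= P j).
  { intro j. unfold P.
    apply Rmult_le_pos; [apply Rmult_le_pos; [lra | apply pow2_ge_0] | apply pow2_ge_0]. }
  apply Rle_trans with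
    (zsum (- Z.of_nat (Z.to_nat (up (Rr / h))) - 1) (2 * Z.to_nat (up (Rr / h)) + 2) P).
  - apply zsum_le. intros j _. destruct Rle_dec as [Hj|Hj]; [|apply HP].
    unfold P, gcut. rewrite cutoff_eq_1. right; ring.
    rewrite plus_IZR. replace ((IZR j + 1) * h) with (IZR j * h + h) by ring.
    eapply Rle_trans. apply Rabs_triang. rewrite (Rabs_right h) by lra. lra.
  - apply zsum_subwindow; auto. lia.
Qed.

Lemma local_sum_Dm_le h Rr z lo n : 0 < h -> h <= 1 ->
  (lo <= - Z.of_nat (Z.to_nat (up (Rr / h))) - 2)%Z ->
  (Z.of_nat (Z.to_nat (up (Rr / h))) + 1 <= lo + Z.of_nat n)%Z ->
  local_sum h Rr (Dm h z) <= local_grad_sq (Rr + 3) h z lo n.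
Proof.
  intros Hh Hh1 Hlo Hhi. rewrite local_sum_eq_zsum. unfold local_grad_sq.
  set (P := fun j => h * gcut (Rr + 3) h (j + 1) ^ 2 * Dp h z j ^ 2).
  assert (HP : forall j, 0 <= P j).
  { intro j. unfold P.
    apply Rmult_le_pos; [apply Rmult_le_pos; [lra | apply pow2_ge_0] | apply pow2_ge_0]. }
  apply Rle_trans with (zsum (- Z.of_nat (Z.to_nat (up (Rr / h))) - 1)
    (2 * Z.to_nat (up (Rr / h)) + 2) (fun j => P (j + -1)%Z)).
  - apply zsum_le. intros j _. destruct Rle_dec as [Hj|Hj]; [|apply HP].
    unfold P, gcut, Dm, Dp. replace (j + -1 + 1)%Z with j by ring.
    rewrite cutoff_eq_1 by lra. replace (j - 1)%Z with (j + -1)%Z by ring. right; ring.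
  - rewrite zsum_shift. apply zsum_subwindow; auto; lia.
Qed.

Lemma local_sum_diff_le h Rr (z w : Z -> R) s M : 1 <= h ->
  (forall j, w j = (z (j + s)%Z - z (j + (s - 1))%Z) / h) ->
  (forall lo n, zsum lo n (fun j => h * z j ^ 2) <= M^2) ->
  local_sum h Rr w <= 4 * M^2.
Proof.
  intros Hh Hw HL2. rewrite local_sum_eq_zsum.
  set (lo := (- Z.of_nat (Z.to_nat (up (Rr / h))) - 1)%Z).
  set (n := (2 * Z.to_nat (up (Rr / h)) + 2)%nat).
  assert (Hnn : forall j, 0 <= h * z j ^ 2) by (intro; apply Rmult_le_pos; [lra|apply pow2_ge_0]).
  apply Rle_trans with
    (zsum lo n (fun j => 2 * (h * z (j + s)%Z ^ 2) + 2 * (h * z (j + (s - 1))%Z ^ 2))).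
  - apply zsum_le. intros j _.
    assert (Hb : h * w j ^ 2 <= 2 * (h * z (j + s)%Z ^ 2) + 2 * (h * z (j + (s - 1))%Z ^ 2)).
    { rewrite Hw. set (a := z (j + s)%Z). set (b := z (j + (s - 1))%Z).
      replace (h * ((a - b) / h) ^ 2) with ((a-b)^2 / h) by (field; lra).
      pose proof (pow2_ge_0 (a+b)). pose proof (pow2_ge_0 a). pose proof (pow2_ge_0 b).
      apply Rmult_le_reg_r with h; [lra|].
      unfold Rdiv. rewrite Rmult_assoc, Rinv_l, Rmult_1_r by lra.
      assert ((a-b)^2 <= 2*a^2 + 2*b^2) by nra.
      replace ((2 * (h * a ^ 2) + 2 * (h * b ^ 2)) * h) with ((2*a^2 + 2*b^2) * (h*h)) by ring.
      assert (1 <= h*h) by nra. nra. }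
    destruct Rle_dec; auto. pose proof (Hnn (j + s)%Z). pose proof (Hnn (j + (s - 1))%Z). lra.
  - rewrite zsum_add, (zsum_scal _ _ 2 (fun j => h * z (j + s)%Z ^ 2)),
      (zsum_scal _ _ 2 (fun j => h * z (j + (s - 1))%Z ^ 2)).
    rewrite (zsum_shift lo n s (fun j => h * z j ^ 2)),
      (zsum_shift lo n (s - 1) (fun j => h * z j ^ 2)).
    pose proof (HL2 (lo + s)%Z n). pose proof (HL2 (lo + (s - 1))%Z n). lra.
Qed.

(** * Energy estimates along a solution *)

Lemma RInt_add_sub_R (A B C : R -> R) a b :
  (forall x, continuity_pt A x) -> (forall x, continuity_pt B x) ->
  (forall x, continuity_pt C x) ->
  RInt (fun t => A t + (B t - C t)) a b = RInt A a b + (RInt B a b - RInt C a b).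
Proof.
  intros HA HB HC.
  rewrite RInt_plus_R, RInt_minus_R; auto; apply ex_RInt_continuity; auto.
  intro x. apply (continuity_pt_minus' B C); auto.
Qed.

Definition smoothing_bound (beta T M Rr : R) : R :=
  2 * (2 * (Rr + 3) + 3) * M^2 + 4 * T * smoothing_const beta M + 2.

Section Solution.
Variables (k : nat) (beta h T : R) (phi : gridfun) (u u' : R -> gridfun) (M : R).
Hypotheses (Hk : k = 1%nat \/ k = 2%nat) (Hh : 0 < h) (HT : 0 < T) (Hphi : is_l2 h phi)
  (HM : l2norm h phi = M) (Hsol : is_solution k beta h T phi u u').

Let ut t j := u (clamp T t) j.

Lemma ut_continuous j x : continuity_pt (fun t => ut t j) x.
Proof. apply (clamped_solution_continuous k beta h T phi u u'); auto; lra. Qed.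

Lemma ut_equation j x : 0 < x < T -> u' x j = - Fop k beta h (ut x) j.
Proof.
  intros Hx. destruct Hsol as [_ [_ [_ [_ Heq]]]].
  specialize (Heq x ltac:(lra) j). unfold ut. rewrite clamp_id by lra.
  change (fun j0 => u x j0) with (u x). lra.
Qed.

Lemma ut_0 : ut 0 = phi.
Proof. unfold ut. rewrite clamp_id by lra. destruct Hsol as [H0 _]. rewrite H0. reflexivity. Qed.

Lemma ut_interior t : 0 < t < T -> ut t = u t.
Proof. intros. unfold ut. rewrite clamp_id by lra. reflexivity. Qed.

Lemma M_nonneg : 0 <= M.
Proof. rewrite <- HM. apply sqrt_pos. Qed.

Lemma phi_window lo n : zsum lo n (fun j => h * phi j ^ 2) <= M^2.
Proof. rewrite <- HM. apply zsum_le_l2norm_sq; auto; lra. Qed.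

Lemma ut_window_bound : exists K, 0 <= K /\ forall t lo n, zsum lo n (fun j => h * ut t j ^ 2) <= K.
Proof.
  destruct (solution_window_bound k beta h T phi u u' Hh Hsol HT) as [K HK].
  assert (HK' : forall t lo n, zsum lo n (fun j => h * ut t j ^ 2) <= K)
    by (intros t lo n; apply HK, clamp_in; lra).
  exists K. split; auto. specialize (HK' 0 0%Z 0%nat). simpl in HK'. lra.
Qed.

Lemma ut_energy_identity (c : Z -> R) lo n t1 : 0 < t1 <= T ->
  zsum lo n (fun j => h * c j * ut t1 j ^ 2) - zsum lo n (fun j => h * c j * phi j ^ 2) =
  -2 * RInt (fun t => zsum lo n (fun j => h * c j * ut t j * Fop k beta h (ut t) j)) 0 t1.
Proof.
  intros Ht1. rewrite <- ut_0.
  apply (zsum_energy_identity ut u' (fun j => h * c j)); try lra.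
  - exact ut_continuous.
  - intros j x Hx. apply (clamped_solution_derivative k beta h T phi); auto. lra.
  - intro x. solve_continuity ut_continuous.
  - intros x Hx. rewrite <- zsum_scal. apply zsum_ext. intros j _.
    rewrite ut_equation by lra. ring.
Qed.

Lemma flux1_at_continuous j x : continuity_pt (fun t => flux1_at k beta h (ut t) j) x.
Proof. unfold flux1_at, flux_lin1, flux_nl. solve_continuity ut_continuous. Qed.

Lemma flux_at_continuous c j x : continuity_pt (fun t => flux_at k beta h c (ut t) j) x.
Proof. unfold flux_at, flux_lin, flux_nl. solve_continuity ut_continuous. Qed.

Lemma ut_mass_le_flux t1 lo n : 0 < t1 <= T ->
  zsum lo n (fun j => h * ut t1 j ^ 2) <= M^2
  + 2 * RInt (fun t => Rabs (flux1_at k beta h (ut t) lo)) 0 t1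
  + 2 * RInt (fun t => Rabs (flux1_at k beta h (ut t) (lo + Z.of_nat n))) 0 t1.
Proof.
  intros Ht1. set (X t j := flux1_at k beta h (ut t) j). set (hi := (lo + Z.of_nat n)%Z).
  set (A t := zsum lo n (fun j => (ut t (j+1)%Z - 2 * ut t j + ut t (j + -1)%Z)^2 / h^2)).
  assert (HE := ut_energy_identity (fun _ => 1) lo n t1 Ht1). cbv beta in HE.
  rewrite (zsum_ext lo n (fun j => h * 1 * ut t1 j ^ 2) (fun j => h * ut t1 j ^ 2)),
    (zsum_ext lo n (fun j => h * 1 * phi j ^ 2) (fun j => h * phi j ^ 2)) in HE
    by (intros; ring).
  replace (fun t => zsum lo n (fun j => h * 1 * ut t j * Fop k beta h (ut t) j))
    with (fun t => A t + (X t hi - X t lo)) in HE.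
  2: { apply functional_extensionality. intro s. unfold A, X, hi. symmetry.
       rewrite (zsum_ext _ _ _ (fun j => h * ut s j * Fop k beta h (ut s) j)) by (intros; ring).
       rewrite zsum_multiplier by lra. ring. }
  assert (HAc : forall x, continuity_pt A x) by (intro; unfold A; solve_continuity ut_continuous).
  rewrite (RInt_add_sub_R A (fun t => X t hi) (fun t => X t lo)) in HE
    by (auto; intro; apply flux1_at_continuous).
  (* the dissipated part [A] only decreases the mass *)
  assert (HA0 : 0 <= RInt A 0 t1).
  { rewrite <- (Rmult_0_r t1), <- (Rminus_0_r t1) at 1. rewrite <- RInt_const_R.
    apply RInt_le_continuity; auto; try lra. intro; apply continuity_pt_const'.
    intros x _. unfold A. apply zsum_ge0. intros.
    apply Rdiv_le_0_compat; [apply pow2_ge_0 | apply pow_lt; auto]. }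
  pose proof (RInt_Rabs_bounds (fun t => X t hi) 0 t1 ltac:(lra) (flux1_at_continuous hi)).
  pose proof (RInt_Rabs_bounds (fun t => X t lo) 0 t1 ltac:(lra) (flux1_at_continuous lo)).
  pose proof (Rabs_maj2 (RInt (fun t => X t hi) 0 t1)).
  pose proof (Rle_abs (RInt (fun t => X t lo) 0 t1)).
  pose proof (phi_window lo n). unfold X in *. lra.
Qed.

(* The flux terms of [ut_mass_le_flux] are made arbitrarily small by widening the window. *)
Lemma ut_l2_bound t lo n : zsum lo n (fun j => h * ut t j ^ 2) <= M^2.
Proof.
  replace (ut t) with (ut (clamp T t)) by (apply functional_extensionality; intro j;
    unfold ut; rewrite (clamp_id T (clamp T t)); auto; apply clamp_in; lra).
  set (t1 := clamp T t). assert (Ht1 : 0 <= t1 <= T) by (apply clamp_in; lra).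
  destruct (Req_dec t1 0) as [E0|E0].
  { rewrite E0, ut_0. apply phi_window. }
  apply le_epsilon. intros eps Heps.
  destruct ut_window_bound as [K [HK0 HK]].
  destruct (exists_small_flux_ends (fun t j => flux1_at k beta h (ut t) j)
    (fun t j => h * ut t j ^ 2) (5 / h^3 + Rabs beta * 1 * (1 + 2 * (K/h)) / h) K t1)
    with (eps := eps / 4) (lo' := lo) (hi' := (lo + Z.of_nat n)%Z)
    as [lo1 [hi1 [Hlo [Hhi [Ilo Ihi]]]]]; try lra.
  - apply flux_const_ge0; lra.
  - exact flux1_at_continuous.
  - intros. apply flux1_at_bound; auto.
  - exact HK.
  - set (n1 := Z.to_nat (hi1 - lo1)).
    apply Rle_trans with (zsum lo1 n1 (fun j => h * ut t1 j ^ 2)).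
    { apply zsum_subwindow; [intros; apply Rmult_le_pos; [lra|apply pow2_ge_0] | lia |
        unfold n1; lia]. }
    pose proof (ut_mass_le_flux t1 lo1 n1 ltac:(lra)).
    replace (lo1 + Z.of_nat n1)%Z with hi1 in * by (unfold n1; lia). lra.
Qed.

Lemma weighted_grad_le_flux rho lo n : 0 < rho -> h <= 1 ->
  (lo <= cut_lo rho h)%Z -> (Z.of_nat (cut_n rho h) <= lo + Z.of_nat n)%Z ->
  RInt (fun t => local_grad_sq rho h (ut t) lo n) 0 T
  <= 2 * (2 * rho + 3) * M^2 + 4 * T * smoothing_const beta M
     + 4 * RInt (fun t => Rabs (flux_at k beta h (weight rho h) (ut t) lo)) 0 T
     + 4 * RInt (fun t => Rabs (flux_at k beta h (weight rho h) (ut t) (lo + Z.of_nat n))) 0 T.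
Proof.
  intros Hrho Hh1 Hlo Hhi. pose proof M_nonneg.
  set (c := weight rho h). set (hi := (lo + Z.of_nat n)%Z).
  set (X t j := flux_at k beta h c (ut t) j).
  set (P t := local_grad_sq rho h (ut t) lo n).
  set (G t := zsum lo n (fun j => h * c j * ut t j * Fop k beta h (ut t) j)).
  assert (HPc : forall x, continuity_pt P x)
    by (intro; unfold P, local_grad_sq, Dp; solve_continuity ut_continuous).
  assert (HXc : forall j x, continuity_pt (fun t => X t j) x) by apply flux_at_continuous.
  (* the weighted mass is nonnegative at time [T] and at most [(2 rho + 3) M^2] at time [0] *)
  assert (HE := ut_energy_identity c lo n T ltac:(lra)). fold G in HE.
  assert (HET : 0 <= zsum lo n (fun j => h * c j * ut T j ^ 2)).
  { apply zsum_ge0. intros. pose proof (weight_bounds rho h j Hrho Hh Hh1).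
    apply Rmult_le_pos; [apply Rmult_le_pos; unfold c; lra | apply pow2_ge_0]. }
  assert (HE0 : zsum lo n (fun j => h * c j * phi j ^ 2) <= (2 * rho + 3) * M^2).
  { apply Rle_trans with (zsum lo n (fun j => (2 * rho + 3) * (h * phi j ^ 2))).
    - apply zsum_le. intros j _. pose proof (weight_bounds rho h j Hrho Hh Hh1).
      assert (0 <= h * phi j ^ 2) by (apply Rmult_le_pos; [lra|apply pow2_ge_0]).
      unfold c. nra.
    - rewrite zsum_scal. apply Rmult_le_compat_l; [lra | apply phi_window]. }
  assert (HGlow : RInt (fun t => (/4 * P t - smoothing_const beta M) + (X t hi - X t lo)) 0 T
                  <= RInt G 0 T).
  { apply RInt_le_continuity; try lra.
    - intro x. solve_continuity HXc.
    - intro x. unfold G. solve_continuity ut_continuous.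
    - intros t _. apply Rge_le. unfold P, G, X, hi.
      apply weighted_multiplier_lower; auto; try lra. intros; apply ut_l2_bound. }
  rewrite (RInt_add_sub_R (fun t => /4 * P t - smoothing_const beta M)
    (fun t => X t hi) (fun t => X t lo)) in HGlow by (auto; intro; solve_continuity HPc).
  rewrite RInt_minus_R, RInt_scal_R, RInt_const_R in HGlow;
    try apply ex_RInt_continuity; auto; try (intro; solve_continuity HPc).
  pose proof (RInt_Rabs_bounds (fun t => X t hi) 0 T ltac:(lra) (HXc hi)).
  pose proof (RInt_Rabs_bounds (fun t => X t lo) 0 T ltac:(lra) (HXc lo)).
  pose proof (Rabs_maj2 (RInt (fun t => X t hi) 0 T)).
  pose proof (Rle_abs (RInt (fun t => X t lo) 0 T)).
  unfold X, P, c, hi in *. lra.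
Qed.

Lemma weighted_energy_bound Rr : 0 < Rr -> h <= 1 ->
  exists lo n, (lo <= - Z.of_nat (Z.to_nat (up (Rr / h))) - 2)%Z /\
    (Z.of_nat (Z.to_nat (up (Rr / h))) + 1 <= lo + Z.of_nat n)%Z /\
    RInt (fun t => local_grad_sq (Rr + 3) h (ut t) lo n) 0 T <= smoothing_bound beta T M Rr.
Proof.
  intros HR Hh1. destruct ut_window_bound as [K [HK0 HK]].
  set (rho := Rr + 3). assert (Hrho : 0 < rho) by (unfold rho; lra).
  set (K1 := Z.of_nat (Z.to_nat (up (Rr / h)))).
  pose proof (cut_lo_neg rho h Hrho Hh).
  destruct (exists_small_flux_ends (fun t j => flux_at k beta h (weight rho h) (ut t) j)
    (fun t j => h * ut t j ^ 2)
    ((10 * (2 * rho + 3) + 8 * h^2) / h^3 + Rabs beta * (2 * rho + 3) * (1 + 2 * (K/h)) / h) K T)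
    with (eps := /4) (lo' := (cut_lo rho h - K1 - 2)%Z)
         (hi' := (Z.of_nat (cut_n rho h) + K1 + 1)%Z)
    as [lo [hi [Hlo [Hhi [Ilo Ihi]]]]]; try lra.
  - apply flux_const_ge0; try lra. pose proof (pow2_ge_0 h). lra.
  - apply flux_at_continuous.
  - intros. apply flux_at_bound; auto. intro i.
    pose proof (weight_bounds rho h i Hrho Hh Hh1). rewrite Rabs_right; lra.
  - exact HK.
  - set (n := Z.to_nat (hi - lo)).
    exists lo, n. split; [unfold K1 in *; lia | split; [unfold n, K1 in *; lia |]].
    pose proof (weighted_grad_le_flux rho lo n Hrho Hh1 ltac:(lia) ltac:(unfold n; lia)).
    replace (lo + Z.of_nat n)%Z with hi in * by (unfold n; lia).
    unfold smoothing_bound. fold rho. lra.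
Qed.

Lemma local_smoothing_small_h Rr : 0 < Rr -> h <= 1 ->
  RInt (fun t => local_sum h Rr (Dp h (u t))) 0 T <= smoothing_bound beta T M Rr /\
  RInt (fun t => local_sum h Rr (Dm h (u t))) 0 T <= smoothing_bound beta T M Rr.
Proof.
  intros HR Hh1. destruct (weighted_energy_bound Rr HR Hh1) as [lo [n [Hlo [Hhi HP]]]].
  assert (HD : forall D : R -> gridfun -> gridfun,
    (forall t, local_sum h Rr (D h (ut t)) <= local_grad_sq (Rr + 3) h (ut t) lo n) ->
    (forall j x, continuity_pt (fun t => D h (ut t) j) x) ->
    RInt (fun t => local_sum h Rr (D h (u t))) 0 T <= smoothing_bound beta T M Rr).
  { intros D HDle HDc. eapply Rle_trans; [|exact HP].
    rewrite (RInt_ext _ (fun t => local_sum h Rr (D h (ut t)))).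
    - apply RInt_le_continuity; auto; try lra.
      + intro. apply local_sum_continuous. auto.
      + intro. unfold local_grad_sq, Dp. solve_continuity ut_continuous.
    - intros x Hx. rewrite Rmin_left, Rmax_right in Hx by lra. rewrite ut_interior; auto. }
  split; apply HD.
  - intros. apply local_sum_Dp_le; auto; lia.
  - intros j x. unfold Dp. solve_continuity ut_continuous.
  - intros. apply local_sum_Dm_le; auto.
  - intros j x. unfold Dm. solve_continuity ut_continuous.
Qed.

Lemma local_smoothing_large_h Rr : 1 < h ->
  RInt (fun t => local_sum h Rr (Dp h (u t))) 0 T <= 4 * M^2 * T /\
  RInt (fun t => local_sum h Rr (Dm h (u t))) 0 T <= 4 * M^2 * T.
Proof.
  intros Hh1.
  assert (HD : forall (D : R -> gridfun -> gridfun) s,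
    (forall z j, D h z j = (z (j + s)%Z - z (j + (s - 1))%Z) / h) ->
    (forall j x, continuity_pt (fun t => D h (ut t) j) x) ->
    RInt (fun t => local_sum h Rr (D h (u t))) 0 T <= 4 * M^2 * T).
  { intros D s HDe HDc.
    rewrite (RInt_ext _ (fun t => local_sum h Rr (D h (ut t)))).
    - apply Rle_trans with (RInt (fun _ => 4 * M^2) 0 T).
      + apply RInt_le_continuity; try lra.
        * intro. apply local_sum_continuous. auto.
        * intro; apply continuity_pt_const'.
        * intros t _. apply (local_sum_diff_le h Rr (ut t) _ s); try lra; auto.
          intros; apply ut_l2_bound.
      + rewrite RInt_const_R. lra.
    - intros x Hx. rewrite Rmin_left, Rmax_right in Hx by lra. rewrite ut_interior; auto. }
  split.
  - apply (HD Dp 1%Z).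
    + intros. unfold Dp. do 2 f_equal. f_equal. lia.
    + intros j x. unfold Dp. solve_continuity ut_continuous.
  - apply (HD Dm 0%Z).
    + intros. unfold Dm. do 2 f_equal; f_equal; lia.
    + intros j x. unfold Dm. solve_continuity ut_continuous.
Qed.

End Solution.

Theorem proposition3p7 :
  forall (k : nat) (beta : R), (k = 1%nat \/ k = 2%nat) -> beta <> 0 ->
  forall (T Rr : R), 0 < T -> 0 < Rr ->
  forall M : R,
  exists C : R,
    forall (h : R) (phi : gridfun), 0 < h ->
      is_l2 h phi -> l2norm h phi = M ->
      forall u u' : R -> gridfun, is_solution k beta h T phi u u' ->
        RInt (fun t => local_sum h Rr (Dp h (u t))) 0 T <= C /\
        RInt (fun t => local_sum h Rr (Dm h (u t))) 0 T <= C.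
Proof.
  intros k beta Hk _ T Rr HT HR M.
  exists (Rmax (4 * M^2 * T) (smoothing_bound beta T M Rr)).
  intros h phi Hh Hphi HM u u' Hsol.
  pose proof (Rmax_l (4 * M^2 * T) (smoothing_bound beta T M Rr)).
  pose proof (Rmax_r (4 * M^2 * T) (smoothing_bound beta T M Rr)).
  destruct (Rle_lt_dec h 1) as [H1|H1].
  - destruct (local_smoothing_small_h k beta h T phi u u' M Hk Hh HT Hphi HM Hsol Rr HR H1).
    split; lra.
  - destruct (local_smoothing_large_h k beta h T phi u u' M Hk Hh HT Hphi HM Hsol Rr H1).
    split; lra.
Qed.
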